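(* Let $\Gamma$ be a pointclass defined for Polish spaces which is closed under continuous preimages. Let $x\in S^1$, $\overline{x}=(x,x,\ldots)\in T^\infty=\prod_{\omega}S^1$, and identify $\pi_1(T^\infty,\overline{x})$ with $\prod_\omega\mathbb{Z}$ via $\pi_1(T^\infty,\overline x)\cong\prod_\omega\pi_1(S^1,x)$ and a fixed generator of $\pi_1(S^1,x)\cong\mathbb{Z}$. Then a subgroup $G\le\prod_\omega\mathbb{Z}$ is in $\Gamma$ as a subset of the Polish group $\prod_\omega\mathbb{Z}$ (product of discrete groups) if and only if $G$ is $\Gamma$ as a subgroup of $\pi_1(T^\infty,\overline{x})$.
   Context: For a path connected Polish space $(X,d)$ and $x\in X$, $L_x$ is the Polish space of loops at $x$ with metric $\sup_s d(l_0(s),l_1(s))$. A subgroup $G\le\pi_1(X,x)$ is $\Gamma$ if the set of loops in $L_x$ whose homotopy classes lie in $G$ belongs to $\Gamma$ in $L_x$. *)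

From Stdlib Require Import Reals ZArith.
From Coquelicot Require Import Coquelicot.
Open Scope R_scope.

Definition is_metric {T : Type} (d : T -> T -> R) : Prop :=
  (forall x y, 0 <= d x y) /\
  (forall x y, d x y = 0 <-> x = y) /\
  (forall x y, d x y = d y x) /\
  (forall x y z, d x z <= d x y + d y z).

Definition metric_complete {T : Type} (d : T -> T -> R) : Prop :=
  forall u : nat -> T,
    (forall eps, 0 < eps -> exists N, forall m n, (N <= m)%nat -> (N <= n)%nat ->
        d (u m) (u n) < eps) ->
    exists l, forall eps, 0 < eps -> exists N, forall n, (N <= n)%nat -> d (u n) l < eps.

Definition metric_separable {T : Type} (d : T -> T -> R) : Prop :=
  (forall x : T, False) \/
  exists e : nat -> T, forall x eps, 0 < eps -> exists n, d x (e n) < eps.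

Definition polish {T : Type} (d : T -> T -> R) : Prop :=
  is_metric d /\ metric_complete d /\ metric_separable d.

Definition metric_continuous {X Y : Type} (dX : X -> X -> R) (dY : Y -> Y -> R)
  (f : X -> Y) : Prop :=
  forall x eps, 0 < eps -> exists delta, 0 < delta /\
    forall x', dX x x' < delta -> dY (f x) (f x') < eps.

Definition pointclass := forall (T : Type), (T -> T -> R) -> (T -> Prop) -> Prop.

Definition closed_cont_preimages (Gamma : pointclass) : Prop :=
  forall (X Y : Type) (dX : X -> X -> R) (dY : Y -> Y -> R),
    polish dX -> polish dY ->
    forall f : X -> Y, metric_continuous dX dY f ->
    forall A : Y -> Prop, Gamma Y dY A -> Gamma X dX (fun x => A (f x)).

Definition on_circle (p : R * R) : Prop := fst p ^ 2 + snd p ^ 2 = 1.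

Definition deucl (p q : R * R) : R :=
  sqrt ((fst p - fst q) ^ 2 + (snd p - snd q) ^ 2).

Definition in_torus (y : nat -> R * R) : Prop := forall k, on_circle (y k).

(* A compatible complete metric for the product topology on T^oo. *)
Definition dT (y z : nat -> R * R) : R :=
  Series (fun k => (/ 2) ^ k * Rmin 1 (deucl (y k) (z k))).

Definition const_seq (x : R * R) : nat -> R * R := fun _ => x.

Definition unit_int (s : R) : Prop := 0 <= s <= 1.

(* Loops are functions R -> T^oo; they are normalized to equal the base point
   outside [0,1] so that the sup metric below is a genuine metric. *)
Definition is_loop (xb : nat -> R * R) (l : R -> nat -> R * R) : Prop :=
  (forall s, in_torus (l s)) /\
  (forall s, ~ unit_int s -> l s = xb) /\
  l 0 = xb /\ l 1 = xb /\
  (forall s eps, unit_int s -> 0 < eps -> exists delta, 0 < delta /\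
     forall s', unit_int s' -> Rabs (s - s') < delta -> dT (l s) (l s') < eps).

Definition loop_space (xb : nat -> R * R) := { l : R -> nat -> R * R | is_loop xb l }.

Definition dL {xb : nat -> R * R} (l0 l1 : loop_space xb) : R :=
  real (Lub_Rbar (fun r => exists s, unit_int s /\
          r = dT (proj1_sig l0 s) (proj1_sig l1 s))).

Definition loop_homotopic (xb : nat -> R * R) (l0 l1 : R -> nat -> R * R) : Prop :=
  exists H : R -> R -> nat -> R * R,
    (forall s t, unit_int s -> unit_int t -> in_torus (H s t)) /\
    (forall s, unit_int s -> H s 0 = l0 s) /\
    (forall s, unit_int s -> H s 1 = l1 s) /\
    (forall t, unit_int t -> H 0 t = xb /\ H 1 t = xb) /\
    (forall s t eps, unit_int s -> unit_int t -> 0 < eps -> exists delta, 0 < delta /\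
       forall s' t', unit_int s' -> unit_int t' ->
         Rabs (s - s') < delta -> Rabs (t - t') < delta ->
         dT (H s t) (H s' t') < eps).

Definition rot (x : R * R) (theta : R) : R * R :=
  (fst x * cos theta - snd x * sin theta, fst x * sin theta + snd x * cos theta).

(* The fixed generator of pi_1(S^1,x) is the class of s |-> x e^{2 pi i s};
   under pi_1(T^oo,xbar) = prod_omega pi_1(S^1,x) = prod_omega Z the element
   n : nat -> Z corresponds to the class of the loop below. *)
Definition wind_loop (x : R * R) (n : nat -> Z) : R -> nat -> R * R :=
  fun s k => rot x (2 * PI * IZR (n k) * s).

Definition loops_in (x : R * R) (G : (nat -> Z) -> Prop)
  : loop_space (const_seq x) -> Prop :=
  fun l => exists n, G n /\
    loop_homotopic (const_seq x) (proj1_sig l) (wind_loop x n).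

Definition dZ (a b : nat -> Z) : R :=
  Series (fun k => (/ 2) ^ k * (if Z.eq_dec (a k) (b k) then 0 else 1)).

Definition is_subgroup (G : (nat -> Z) -> Prop) : Prop :=
  G (fun _ => 0%Z) /\ (forall a b, G a -> G b -> G (fun k => (a k - b k)%Z)).

(* A loop in the infinite torus is determined up to homotopy by the sequence of
   winding numbers of its coordinates: lifting each coordinate to a path of angles,
   loops with the same winding sequence are joined by the straight-line homotopy of
   the lifts, and conversely winding numbers are homotopy invariant because, by
   compactness of the square, nearby slices of a homotopy stay uniformly close.
   Hence the loops with class in G form the preimage of G under the winding map
   [L_x -> prod_omega Z].  This map is continuous (uniformly close loops have equal
   winding numbers coordinatewise) and has the continuous section
   [n |-> (s |-> (x e^(2 pi i n_k s))_k)].  Both spaces are Polish (the loop space is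
   complete for the uniform metric and separable thanks to piecewise-linear angle
   lifts with rational data), so closure of Gamma under continuous preimages gives
   both implications. *)

From Stdlib Require Import Reals ZArith.
From Coquelicot Require Import Coquelicot.
From Stdlib Require Import Lra Lia Cantor.
From Stdlib Require Import Classical ClassicalEpsilon FunctionalExtensionality PropExtensionality ProofIrrelevance.
Open Scope R_scope.

(** * Series weighted by powers of one half *)

Definition wsum (c : nat -> R) : R := Series (fun k => (/2)^k * c k).

Lemma pow_half_pos k : 0 < (/2)^k.
Proof. apply pow_lt; lra. Qed.

Lemma pow_half_le1 n : (/2)^n <= 1.
Proof. induction n; simpl. lra. pose proof (pow_half_pos n). nra. Qed.

Lemma pow_half_le k K : (k <= K)%nat -> (/2)^K <= (/2)^k.
Proof.
  intros H. replace K with (k + (K - k))%nat by lia. rewrite pow_add.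
  pose proof (pow_half_pos k). pose proof (pow_half_le1 (K - k)). pose proof (pow_half_pos (K - k)).
  nra.
Qed.

Lemma pow_half_small eps : 0 < eps -> exists K, 2 * (/2)^K < eps.
Proof.
  intros He. destruct (pow_lt_1_zero (/2)) with (y := eps / 2) as [K HK].
  - rewrite Rabs_pos_eq; lra.
  - lra.
  - exists K. specialize (HK K (le_n K)). rewrite Rabs_pos_eq in HK by (left; apply pow_half_pos). lra.
Qed.

Lemma Series_half : Series (pow (/2)) = 2.
Proof. rewrite Series_geom. field. rewrite Rabs_pos_eq; lra. Qed.

Lemma Series_nonneg a : (forall n, 0 <= a n) -> ex_series a -> 0 <= Series a.
Proof.
  intros H1 H2.
  assert (E : Series (fun n => 0 * a n) = 0) by (rewrite Series_scal_l; ring).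
  rewrite <- E. apply Series_le; auto. intros n; rewrite Rmult_0_l; split; [lra | auto].
Qed.

Lemma sum_f_R0_ge_last a k : (forall n, 0 <= a n) -> a k <= sum_f_R0 a k.
Proof.
  intros H. destruct k; simpl. lra.
  pose proof (cond_pos_sum a k H). lra.
Qed.

Section WeightedSums.

Variables (c : nat -> R) (B : R).
Hypothesis c_bound : forall k, 0 <= c k <= B.

Lemma ex_series_wsum : ex_series (fun k => (/2)^k * c k).
Proof.
  apply (@ex_series_le R_AbsRing R_CompleteNormedModule _ (fun k => B * (/2)^k)).
  - intros n. change (norm ((/2)^n * c n)) with (Rabs ((/2)^n * c n)).
    pose proof (pow_half_pos n). specialize (c_bound n).
    rewrite Rabs_pos_eq by nra. nra.
  - apply (@ex_series_scal_l R_AbsRing R_NormedModule B (fun k => (/2)^k)).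
    apply ex_series_geom. rewrite Rabs_pos_eq; lra.
Qed.

Lemma wsum_nonneg : 0 <= wsum c.
Proof.
  apply Series_nonneg; [|apply ex_series_wsum].
  intros n; pose proof (pow_half_pos n); specialize (c_bound n); nra.
Qed.

Lemma wsum_ge_term k : (/2)^k * c k <= wsum c.
Proof.
  assert (Hnn : forall n, 0 <= (/2)^n * c n).
  { intros n; pose proof (pow_half_pos n); specialize (c_bound n); nra. }
  unfold wsum. rewrite (Series_incr_n _ (S k)); [| lia | apply ex_series_wsum].
  simpl Init.Nat.pred.
  pose proof (sum_f_R0_ge_last (fun k => (/2)^k * c k) k Hnn).
  assert (0 <= Series (fun n => (/2)^(S k + n) * c (S k + n)%nat)); [|lra].
  apply Series_nonneg; [intros; apply Hnn|].
  apply (ex_series_incr_n (fun k => (/2)^k * c k) (S k)), ex_series_wsum.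
Qed.

End WeightedSums.

Lemma wsum_plus c c' B : (forall k, 0 <= c k <= B) -> (forall k, 0 <= c' k <= B) ->
  wsum (fun k => c k + c' k) = wsum c + wsum c'.
Proof.
  intros Hc Hc'. unfold wsum. rewrite <- Series_plus.
  - apply Series_ext. intros; ring.
  - apply (ex_series_wsum c B Hc).
  - apply (ex_series_wsum c' B Hc').
Qed.

Lemma wsum_le c c' B : (forall k, 0 <= c k <= c' k) -> (forall k, c' k <= B) -> wsum c <= wsum c'.
Proof.
  intros H HB. apply Series_le.
  - intros n; pose proof (pow_half_pos n); specialize (H n). split; nra.
  - apply (ex_series_wsum c' B). intros k; specialize (H k); specialize (HB k); lra.
Qed.

(* The weights [(/2)^k], [k >= K], sum to [2 (/2)^K]. *)
Lemma wsum_le_prefix c K d : (forall k, 0 <= c k <= 1) -> 0 <= d ->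
  (forall k, (k < K)%nat -> c k <= d) -> wsum c <= 2 * d + 2 * (/2)^K.
Proof.
  intros Hc Hd HK.
  set (tail := fun n => if Nat.ltb n K then 0 else 1).
  assert (Htail : forall k, 0 <= tail k <= 1) by (intros k; unfold tail; destruct Nat.ltb; lra).
  apply Rle_trans with (wsum (fun n => d + tail n)).
  - apply (wsum_le _ _ (d + 1)).
    2: intros k; specialize (Htail k); lra.
    intros k. split; [apply Hc|]. unfold tail. destruct (Nat.ltb k K) eqn:E.
    + apply Nat.ltb_lt in E. specialize (HK k E). lra.
    + specialize (Hc k). lra.
  - rewrite (wsum_plus _ _ (Rmax d 1)).
    2, 3: intros k; try specialize (Htail k); pose proof (Rmax_l d 1); pose proof (Rmax_r d 1); lra.
    assert (E1 : wsum (fun _ => d) = 2 * d).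
    { unfold wsum. rewrite (Series_ext _ (fun n => d * (/2)^n)) by (intros; ring).
      rewrite Series_scal_l, Series_half; ring. }
    assert (E2 : wsum tail = 2 * (/2)^K).
    { unfold wsum. rewrite (Series_incr_n_aux _ K).
      - rewrite (Series_ext _ (fun n => (/2)^K * (/2)^n)).
        + rewrite Series_scal_l, Series_half; ring.
        + intros n. unfold tail. destruct (Nat.ltb (K + n) K) eqn:E.
          * apply Nat.ltb_lt in E; lia.
          * rewrite pow_add; ring.
      - intros k Hk. unfold tail. apply Nat.ltb_lt in Hk. rewrite Hk. ring. }
    lra.
Qed.

(** * Plane and circle geometry *)

Definition dot (p q : R * R) := fst p * fst q + snd p * snd q.
Definition cross (p q : R * R) := fst p * snd q - snd p * fst q.

(* The oriented angle from [p] to [q], correct when [dot p q > 0]. *)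
Definition ang (p q : R * R) := atan (cross p q / dot p q).

Lemma deucl_nonneg p q : 0 <= deucl p q.
Proof. apply sqrt_pos. Qed.

Lemma deucl_sym p q : deucl p q = deucl q p.
Proof. unfold deucl. f_equal. ring. Qed.

Lemma deucl_refl p : deucl p p = 0.
Proof. unfold deucl. replace ((fst p - fst p) ^ 2 + (snd p - snd p) ^ 2) with 0 by ring. apply sqrt_0. Qed.

Lemma deucl_eq0 p q : deucl p q = 0 -> p = q.
Proof.
  destruct p as [p1 p2], q as [q1 q2]. unfold deucl; simpl. intros H.
  pose proof (pow2_ge_0 (p1 - q1)); pose proof (pow2_ge_0 (p2 - q2)).
  apply sqrt_eq_0 in H; [|lra].
  assert (A1 : Rsqr (p1 - q1) = 0) by (unfold Rsqr; simpl in *; nra).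
  assert (A2 : Rsqr (p2 - q2) = 0) by (unfold Rsqr; simpl in *; nra).
  apply Rsqr_0_uniq in A1, A2. f_equal; lra.
Qed.

Lemma sqrt_le_of_le_sqr a b : 0 <= b -> a <= b * b -> sqrt a <= b.
Proof. intros Hb H. rewrite <- (sqrt_square b Hb). apply sqrt_le_1_alt; auto. Qed.

Lemma deucl_fst_le p q : Rabs (fst p - fst q) <= deucl p q.
Proof.
  unfold deucl. rewrite <- sqrt_Rsqr_abs. apply sqrt_le_1_alt.
  unfold Rsqr. pose proof (pow2_ge_0 (snd p - snd q)). simpl; lra.
Qed.

Lemma deucl_snd_le p q : Rabs (snd p - snd q) <= deucl p q.
Proof.
  unfold deucl. rewrite <- sqrt_Rsqr_abs. apply sqrt_le_1_alt.
  unfold Rsqr. pose proof (pow2_ge_0 (fst p - fst q)). simpl; lra.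
Qed.

Lemma deucl_le_abs_sum p q : deucl p q <= Rabs (fst p - fst q) + Rabs (snd p - snd q).
Proof.
  unfold deucl. set (a := fst p - fst q); set (b := snd p - snd q).
  pose proof (Rabs_pos a); pose proof (Rabs_pos b).
  rewrite <- (pow2_abs a), <- (pow2_abs b). apply sqrt_le_of_le_sqr; nra.
Qed.

Lemma deucl_triangle p q r : deucl p r <= deucl p q + deucl q r.
Proof.
  unfold deucl.
  set (a := fst p - fst q); set (b := snd p - snd q); set (c := fst q - fst r); set (d := snd q - snd r).
  replace (fst p - fst r) with (a + c) by (unfold a, c; ring).
  replace (snd p - snd r) with (b + d) by (unfold b, d; ring).
  pose proof (sqrt_pos (a^2+b^2)); pose proof (sqrt_pos (c^2+d^2)).
  pose proof (pow2_ge_0 a); pose proof (pow2_ge_0 b); pose proof (pow2_ge_0 c); pose proof (pow2_ge_0 d).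
  apply sqrt_le_of_le_sqr; [lra|].
  assert (Hs1 : sqrt (a^2+b^2) * sqrt (a^2+b^2) = a^2+b^2) by (apply sqrt_sqrt; lra).
  assert (Hs2 : sqrt (c^2+d^2) * sqrt (c^2+d^2) = c^2+d^2) by (apply sqrt_sqrt; lra).
  assert (Cauchy_Schwarz : a*c + b*d <= sqrt (a^2+b^2) * sqrt (c^2+d^2)).
  { rewrite <- sqrt_mult by lra.
    destruct (Rle_dec (a*c+b*d) 0).
    - pose proof (sqrt_pos ((a^2+b^2)*(c^2+d^2))); lra.
    - rewrite <- (sqrt_square (a*c+b*d)) by lra. apply sqrt_le_1_alt.
      pose proof (pow2_ge_0 (a*d-b*c)). nra. }
  nra.
Qed.

Lemma deucl_sqr_circle p q : on_circle p -> on_circle q -> deucl p q * deucl p q = 2 - 2 * dot p q.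
Proof.
  unfold on_circle, deucl, dot; intros Hp Hq.
  pose proof (pow2_ge_0 (fst p - fst q)); pose proof (pow2_ge_0 (snd p - snd q)).
  rewrite sqrt_sqrt by lra.
  transitivity ((fst p ^ 2 + snd p ^ 2) + (fst q ^ 2 + snd q ^ 2) - 2 * (fst p * fst q + snd p * snd q));
    [ring | rewrite Hp, Hq; ring].
Qed.

Lemma dot_gt_half p q : on_circle p -> on_circle q -> deucl p q < 1 -> 1/2 < dot p q.
Proof. intros Hp Hq H. pose proof (deucl_sqr_circle p q Hp Hq). pose proof (deucl_nonneg p q). nra. Qed.

Lemma rot_circle p a : on_circle p -> on_circle (rot p a).
Proof. unfold on_circle, rot; simpl; intros H. pose proof (sin2_cos2 a). unfold Rsqr in *. nra. Qed.

Lemma rot_rot p a b : rot (rot p a) b = rot p (a + b).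
Proof. unfold rot; simpl. rewrite cos_plus, sin_plus. f_equal; ring. Qed.

Lemma rot_0 p : rot p 0 = p.
Proof. unfold rot. rewrite cos_0, sin_0. destruct p; simpl; f_equal; ring. Qed.

Lemma rot_2PI_int p k : rot p (2 * PI * IZR k) = p.
Proof.
  assert (Hs : sin (PI * IZR k) = 0) by (apply sin_eq_0_1; exists k; ring).
  assert (Hcos : cos (2 * PI * IZR k) = 1).
  { replace (2 * PI * IZR k) with (2 * (PI * IZR k)) by ring. rewrite cos_2a_sin, Hs; ring. }
  assert (Hsin : sin (2 * PI * IZR k) = 0).
  { apply sin_eq_0_1. exists (2 * k)%Z. rewrite mult_IZR. ring. }
  unfold rot. rewrite Hcos, Hsin. destruct p; simpl; f_equal; ring.
Qed.

Lemma dot_rot p a b : on_circle p -> dot (rot p a) (rot p b) = cos (a - b).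
Proof.
  unfold on_circle, dot, rot; intros H; simpl. rewrite cos_minus.
  transitivity ((cos a * cos b + sin a * sin b) * (fst p ^ 2 + snd p ^ 2)); [ring | rewrite H; ring].
Qed.

Lemma cross_rot p a b : on_circle p -> cross (rot p a) (rot p b) = sin (b - a).
Proof.
  unfold on_circle, cross, rot; intros H; simpl. rewrite sin_minus.
  transitivity ((sin b * cos a - cos b * sin a) * (fst p ^ 2 + snd p ^ 2)); [ring | rewrite H; ring].
Qed.

Lemma rot_ang p q : on_circle p -> on_circle q -> 0 < dot p q -> rot p (ang p q) = q.
Proof.
  intros Hp Hq Hd.
  assert (E : dot p q ^ 2 + cross p q ^ 2 = 1).
  { unfold on_circle, dot, cross in *.
    transitivity ((fst p ^ 2 + snd p ^ 2) * (fst q ^ 2 + snd q ^ 2)); [ring | rewrite Hp, Hq; ring]. }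
  set (u := cross p q / dot p q).
  assert (Hsq : sqrt (1 + u²) = / dot p q).
  { assert (E2 : 1 + u² = / dot p q * / dot p q).
    { unfold u, Rsqr. field_simplify_eq; [simpl in E |- *; lra | lra]. }
    rewrite E2. apply sqrt_square. left; apply Rinv_0_lt_compat; auto. }
  assert (Hc : cos (ang p q) = dot p q) by (unfold ang; fold u; rewrite cos_atan, Hsq; field; lra).
  assert (Hs : sin (ang p q) = cross p q) by (unfold ang; fold u; rewrite sin_atan, Hsq; unfold u; field; lra).
  unfold rot. rewrite Hc, Hs. unfold on_circle, dot, cross in *.
  destruct p as [p1 p2], q as [q1 q2]; simpl in *. f_equal; nra.
Qed.

Lemma ang_refl p : ang p p = 0.
Proof.
  unfold ang, cross. replace (fst p * snd p - snd p * fst p) with 0 by ring.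
  unfold Rdiv. rewrite Rmult_0_l. apply atan_0.
Qed.

Lemma rot_inj_mod_2PI p a b : on_circle p -> rot p a = rot p b -> exists k, a - b = 2 * PI * IZR k.
Proof.
  intros Hp E.
  assert (C : cos (a - b) = 1).
  { rewrite <- (dot_rot p) by auto. rewrite E, dot_rot by auto. rewrite Rminus_diag. apply cos_0. }
  assert (Hs : sin ((a - b) / 2) = 0).
  { replace (a - b) with (2 * ((a - b) / 2)) in C by field. rewrite cos_2a_sin in C. nra. }
  apply sin_eq_0_0 in Hs. destruct Hs as [k Hk]. exists k. lra.
Qed.

Lemma Rabs_sin_le y : Rabs (sin y) <= Rabs y.
Proof.
  assert (Hpos : forall y, 0 < y -> Rabs (sin y) <= y).
  { intros z Hz. destruct (Rle_dec z 1).
    - pose proof (sin_lt_x z Hz).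
      assert (0 <= sin z) by (apply sin_ge_0; pose proof PI2_1; lra).
      rewrite Rabs_pos_eq; lra.
    - pose proof (SIN_bound z). apply Rabs_le. lra. }
  destruct (Rtotal_order y 0) as [H|[H|H]].
  - rewrite <- (Ropp_involutive y), sin_neg, !Rabs_Ropp, (Rabs_left y) by lra. apply Hpos; lra.
  - subst; rewrite sin_0; lra.
  - rewrite (Rabs_pos_eq y) by lra. auto.
Qed.

Lemma deucl_rot_le p a b : on_circle p -> deucl (rot p a) (rot p b) <= Rabs (a - b).
Proof.
  intros Hp. pose proof (deucl_sqr_circle _ _ (rot_circle p a Hp) (rot_circle p b Hp)) as E.
  rewrite dot_rot in E by auto.
  replace (a - b) with (2 * ((a - b) / 2)) in E by field. rewrite cos_2a_sin in E.
  pose proof (Rsqr_le_abs_1 _ _ (Rabs_sin_le ((a - b) / 2))) as H. unfold Rsqr in H.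
  assert (E2 : Rsqr (deucl (rot p a) (rot p b)) <= Rsqr (a - b)).
  { unfold Rsqr. rewrite E. replace ((a - b) * (a - b)) with (4 * ((a - b) / 2 * ((a - b) / 2))) by field. lra. }
  apply Rsqr_le_abs_0 in E2. rewrite (Rabs_pos_eq (deucl _ _)) in E2 by apply deucl_nonneg. exact E2.
Qed.

(** * Continuity on the unit interval *)

Definition clamp (s : R) := Rmax 0 (Rmin 1 s).

Lemma clamp_range s : 0 <= clamp s <= 1.
Proof. unfold clamp, Rmax, Rmin; repeat destruct Rle_dec; lra. Qed.

Lemma clamp_id s : 0 <= s <= 1 -> clamp s = s.
Proof. unfold clamp, Rmax, Rmin; repeat destruct Rle_dec; lra. Qed.

Lemma clamp_idem s : clamp (clamp s) = clamp s.
Proof. apply clamp_id, clamp_range. Qed.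

Lemma clamp_ge1 u : 1 <= u -> clamp u = 1.
Proof. unfold clamp, Rmax, Rmin; repeat destruct Rle_dec; lra. Qed.

Lemma clamp_le0 u : u <= 0 -> clamp u = 0.
Proof. unfold clamp, Rmax, Rmin; repeat destruct Rle_dec; lra. Qed.

Lemma clamp_out s : ~ unit_int s -> clamp s = 0 \/ clamp s = 1.
Proof. unfold unit_int, clamp, Rmax, Rmin; repeat destruct Rle_dec; lra. Qed.

Lemma clamp_lipschitz s s' : Rabs (clamp s - clamp s') <= Rabs (s - s').
Proof. unfold clamp, Rmax, Rmin; repeat destruct Rle_dec; unfold Rabs; repeat destruct Rcase_abs; lra. Qed.

Lemma Rmin_lipschitz a s s' : Rabs (Rmin s a - Rmin s' a) <= Rabs (s - s').
Proof. unfold Rmin; repeat destruct Rle_dec; unfold Rabs; repeat destruct Rcase_abs; lra. Qed.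

Lemma continuity_pt_lipschitz f x C : 0 <= C -> (forall y, Rabs (f y - f x) <= C * Rabs (y - x)) ->
  continuity_pt f x.
Proof.
  intros HC H eps Heps. exists (eps / (C + 1)). split; [apply Rdiv_lt_0_compat; lra|].
  intros y [_ Hy]. simpl in *. unfold R_dist in *. eapply Rle_lt_trans; [apply H|].
  apply Rle_lt_trans with (C * (eps / (C + 1))); [apply Rmult_le_compat_l; lra|].
  apply Rmult_lt_reg_r with (C + 1); [lra|]. field_simplify; lra.
Qed.

Lemma continuity_pt_of_eps_delta f x :
  (forall eps, 0 < eps -> exists d, 0 < d /\ forall y, Rabs (y - x) < d -> Rabs (f y - f x) < eps) ->
  continuity_pt f x.
Proof.
  intros H eps Heps. destruct (H eps Heps) as [d [Hd Hy]]. exists d; split; auto.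
  intros y [_ Hy']. simpl in *. unfold R_dist in *. auto.
Qed.

Lemma continuity_pt_eps_delta f x : continuity_pt f x ->
  forall eps, 0 < eps -> exists d, 0 < d /\ forall y, Rabs (y - x) < d -> Rabs (f y - f x) < eps.
Proof.
  intros H eps Heps. destruct (H eps Heps) as [d [Hd Hy]]. exists d; split; auto.
  intros y Hy'. destruct (Req_dec y x) as [->|Hne].
  - rewrite Rminus_diag, Rabs_R0; auto.
  - apply (Hy y). split; [split; [exact I | auto] | auto].
Qed.

Lemma continuity_pt_on_unit f t : continuity_pt f t -> forall eps, 0 < eps -> exists d, 0 < d /\
  forall t', 0 <= t' <= 1 -> Rabs (t' - t) < d -> Rabs (f t' - f t) < eps.
Proof.
  intros H eps Heps. destruct (continuity_pt_eps_delta f t H eps Heps) as [d [Hd H']].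
  exists d; split; auto.
Qed.

Lemma cont_const c x : continuity_pt (fun _ => c) x.
Proof. apply continuity_pt_const. intros a b; reflexivity. Qed.
Lemma cont_id x : continuity_pt (fun y => y) x.
Proof. apply continuity_pt_id. Qed.
Lemma cont_plus f g x : continuity_pt f x -> continuity_pt g x -> continuity_pt (fun y => f y + g y) x.
Proof. apply (continuity_pt_plus f g). Qed.
Lemma cont_minus f g x : continuity_pt f x -> continuity_pt g x -> continuity_pt (fun y => f y - g y) x.
Proof. apply (continuity_pt_minus f g). Qed.
Lemma cont_mult f g x : continuity_pt f x -> continuity_pt g x -> continuity_pt (fun y => f y * g y) x.
Proof. apply (continuity_pt_mult f g). Qed.
Lemma cont_div f g x : continuity_pt f x -> continuity_pt g x -> g x <> 0 ->
  continuity_pt (fun y => f y / g y) x.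
Proof. apply (continuity_pt_div f g). Qed.
Lemma cont_comp f g x : continuity_pt f x -> continuity_pt g (f x) -> continuity_pt (fun y => g (f y)) x.
Proof. apply (continuity_pt_comp f g). Qed.
Lemma cont_cos f x : continuity_pt f x -> continuity_pt (fun y => cos (f y)) x.
Proof. intros; apply cont_comp; auto. apply continuity_cos. Qed.
Lemma cont_sin f x : continuity_pt f x -> continuity_pt (fun y => sin (f y)) x.
Proof. intros; apply cont_comp; auto. apply continuity_sin. Qed.
Lemma cont_atan f x : continuity_pt f x -> continuity_pt (fun y => atan (f y)) x.
Proof. intros; apply cont_comp; auto. apply derivable_continuous_pt, derivable_pt_atan. Qed.
Lemma cont_clamp f x : continuity_pt f x -> continuity_pt (fun y => clamp (f y)) x.
Proof.
  intros; apply cont_comp; auto. apply continuity_pt_lipschitz with 1; [lra|].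
  intros; rewrite Rmult_1_l; apply clamp_lipschitz.
Qed.
Lemma cont_Rmin f a x : continuity_pt f x -> continuity_pt (fun y => Rmin (f y) a) x.
Proof.
  intros; apply (cont_comp f (fun z => Rmin z a)); auto. apply continuity_pt_lipschitz with 1; [lra|].
  intros; rewrite Rmult_1_l; apply Rmin_lipschitz.
Qed.
Lemma cont_ext f g x : (forall y, f y = g y) -> continuity_pt f x -> continuity_pt g x.
Proof. intros E H. replace g with f; auto. apply functional_extensionality; auto. Qed.

Lemma IZR_neq_plus_half k m : IZR k <> IZR m + / 2.
Proof.
  intros E. assert (E' : IZR (k - m) = / 2) by (rewrite minus_IZR; lra).
  destruct (Z_le_gt_dec (k - m) 0) as [H|H].
  - apply IZR_le in H. lra.
  - assert (H' : (1 <= k - m)%Z) by lia. apply IZR_le in H'. lra.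
Qed.

(* The unit interval is connected: by the intermediate value theorem [f] would
   otherwise take a value halfway between two integers. *)
Lemma int_valued_continuous_const f :
  (forall t, 0 <= t <= 1 -> forall eps, 0 < eps -> exists d, 0 < d /\
      forall t', 0 <= t' <= 1 -> Rabs (t' - t) < d -> Rabs (f t' - f t) < eps) ->
  (forall t, 0 <= t <= 1 -> exists k, f t = IZR k) -> f 0 = f 1.
Proof.
  intros Hc Hi.
  set (g := fun t => f (clamp t)).
  assert (Cg : continuity g).
  { intros t. apply continuity_pt_of_eps_delta. intros eps Heps.
    destruct (Hc (clamp t) (clamp_range t) eps Heps) as [d [Hd Hd']].
    exists d; split; auto. intros y Hy. apply Hd'; [apply clamp_range|].
    eapply Rle_lt_trans; [apply clamp_lipschitz | auto]. }
  destruct (Hi 0) as [k0 E0]; [lra|]. destruct (Hi 1) as [k1 E1]; [lra|].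
  destruct (Z.eq_dec k0 k1) as [->|Hne]; [congruence|]. exfalso.
  assert (Hg0 : g 0 = IZR k0) by (unfold g; rewrite clamp_id; auto; lra).
  assert (Hg1 : g 1 = IZR k1) by (unfold g; rewrite clamp_id; auto; lra).
  assert (Hmid : exists m, Rmin (g 0) (g 1) <= IZR m + / 2 <= Rmax (g 0) (g 1)).
  { rewrite Hg0, Hg1. destruct (Z.lt_total k0 k1) as [Hlt|[Heq|Hlt]]; [|contradiction|].
    - exists k0. assert (H1 : IZR (k0 + 1) <= IZR k1) by (apply IZR_le; lia). rewrite plus_IZR in H1.
      rewrite Rmin_left, Rmax_right by lra. lra.
    - exists k1. assert (H1 : IZR (k1 + 1) <= IZR k0) by (apply IZR_le; lia). rewrite plus_IZR in H1.
      rewrite Rmin_right, Rmax_left by lra. lra. }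
  destruct Hmid as [m Hm].
  destruct (IVT_gen g 0 1 _ Cg Hm) as [t [_ Et]].
  destruct (Hi (clamp t) (clamp_range t)) as [k Ek].
  unfold g in Et. rewrite Ek in Et. exact (IZR_neq_plus_half k m Et).
Qed.

(** * The metric of the infinite torus *)

Lemma dT_term_range (y z : nat -> R * R) k : 0 <= Rmin 1 (deucl (y k) (z k)) <= 1.
Proof. pose proof (deucl_nonneg (y k) (z k)). unfold Rmin; destruct Rle_dec; lra. Qed.

Lemma dT_wsum y z : dT y z = wsum (fun k => Rmin 1 (deucl (y k) (z k))).
Proof. reflexivity. Qed.

Lemma dT_ge_term y z k : (/2)^k * Rmin 1 (deucl (y k) (z k)) <= dT y z.
Proof. apply (wsum_ge_term _ 1 (dT_term_range y z) k). Qed.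

Lemma dT_nonneg y z : 0 <= dT y z.
Proof. apply (wsum_nonneg _ 1 (dT_term_range y z)). Qed.

Lemma dT_le_prefix y z K d : 0 <= d -> (forall k, (k < K)%nat -> deucl (y k) (z k) <= d) ->
  dT y z <= 2 * d + 2 * (/2)^K.
Proof.
  intros Hd H. apply wsum_le_prefix; auto; [apply dT_term_range|].
  intros k Hk. specialize (H k Hk). unfold Rmin; destruct Rle_dec; lra.
Qed.

Lemma dT_le2 y z : dT y z <= 2.
Proof.
  assert (H : dT y z <= 2 * 0 + 2 * (/2)^0) by (apply dT_le_prefix; [lra | intros; lia]).
  simpl in H. lra.
Qed.

Lemma dT_lt_coord y z k e : e <= 1 -> dT y z < (/2)^k * e -> deucl (y k) (z k) < e.
Proof.
  intros He H. pose proof (dT_ge_term y z k). pose proof (pow_half_pos k).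
  assert (Rmin 1 (deucl (y k) (z k)) < e) by (apply Rmult_lt_reg_l with ((/2)^k); auto; lra).
  unfold Rmin in *; destruct Rle_dec; lra.
Qed.

Lemma dT_sym y z : dT y z = dT z y.
Proof. unfold dT. apply Series_ext. intros; rewrite deucl_sym; auto. Qed.

Lemma dT_refl y : dT y y = 0.
Proof.
  apply Rle_antisym; [| apply dT_nonneg]. apply Rnot_lt_le. intros Hlt.
  destruct (pow_half_small _ Hlt) as [K HK].
  assert (dT y y <= 2 * 0 + 2 * (/2)^K); [|lra].
  apply dT_le_prefix; [lra|]. intros k _. rewrite deucl_refl. lra.
Qed.

Lemma dT_triangle y z w : dT y w <= dT y z + dT z w.
Proof.
  rewrite !dT_wsum, <- (wsum_plus _ _ 1) by apply dT_term_range.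
  apply (wsum_le _ _ 2).
  - intros k. pose proof (dT_term_range y w k). split; [lra|].
    pose proof (deucl_triangle (y k) (z k) (w k)).
    pose proof (deucl_nonneg (y k) (z k)). pose proof (deucl_nonneg (z k) (w k)).
    unfold Rmin in *; repeat destruct Rle_dec; lra.
  - intros k. pose proof (dT_term_range y z k). pose proof (dT_term_range z w k). lra.
Qed.

Lemma dT_eq0 y z : dT y z = 0 -> y = z.
Proof.
  intros H. apply functional_extensionality. intros k. apply deucl_eq0.
  pose proof (dT_ge_term y z k). pose proof (pow_half_pos k). pose proof (deucl_nonneg (y k) (z k)).
  assert (Rmin 1 (deucl (y k) (z k)) <= 0) by (apply Rmult_le_reg_l with ((/2)^k); auto; lra).
  unfold Rmin in *; destruct Rle_dec; lra.
Qed.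

Lemma exists_common_delta (Rel : nat -> R -> Prop) :
  (forall k, exists d, 0 < d /\ Rel k d) ->
  (forall k d d', 0 < d' -> d' <= d -> Rel k d -> Rel k d') ->
  forall K, exists d, 0 < d /\ forall k, (k < K)%nat -> Rel k d.
Proof.
  intros Hex Hmon K. induction K.
  - exists 1; split; [lra | intros; lia].
  - destruct IHK as [d [Hd HK]]. destruct (Hex K) as [d' [Hd' HK']].
    exists (Rmin d d'); split; [unfold Rmin; destruct Rle_dec; lra|].
    intros k Hk. destruct (Nat.eq_dec k K) as [->|Hne].
    + apply (Hmon _ d'); auto; [unfold Rmin; destruct Rle_dec; lra | apply Rmin_r].
    + apply (Hmon _ d); auto; [unfold Rmin; destruct Rle_dec; lra | apply Rmin_l | apply HK; lia].
Qed.

(* Convergence in [dT] only needs control of finitely many coordinates. *)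
Lemma dT_small_of_coords {P : Type} (A : nat -> R * R) (B : P -> nat -> R * R) (Q : P -> R -> Prop) :
  (forall nu d d', 0 < d' -> d' <= d -> Q nu d' -> Q nu d) ->
  (forall k e, 0 < e -> exists d, 0 < d /\ forall nu, Q nu d -> deucl (A k) (B nu k) < e) ->
  forall eps, 0 < eps -> exists d, 0 < d /\ forall nu, Q nu d -> dT A (B nu) < eps.
Proof.
  intros Hmon Hk eps Heps. destruct (pow_half_small (eps/2)) as [K HK]; [lra|].
  destruct (exists_common_delta (fun k d => forall nu, Q nu d -> deucl (A k) (B nu k) < eps / 8)) with (K := K)
    as [d [Hd Hd']].
  - intros k; apply Hk; lra.
  - intros k d d' Hd' Hle H nu Hq. apply H. apply (Hmon nu d d'); auto.
  - exists d; split; auto. intros nu Hq.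
    assert (dT A (B nu) <= 2 * (eps/8) + 2 * (/2)^K); [|lra].
    apply dT_le_prefix; [lra|]. intros k Hk'. left; apply Hd'; auto.
Qed.

(** * Winding numbers of paths on the circle *)

Definition has_winding (x : R * R) (g : R -> R * R) (n : Z) : Prop :=
  exists th : R -> R, (forall s, continuity_pt th s) /\ (forall s, rot x (th s) = g s) /\
    th 0 = 0 /\ th 1 = 2 * PI * IZR n.

Definition circle_path (x : R * R) (g : R -> R * R) : Prop :=
  (forall s, on_circle (g s)) /\ (forall s, g s = g (clamp s)) /\
  (forall s, continuity_pt (fun s => fst (g s)) s /\ continuity_pt (fun s => snd (g s)) s) /\
  g 0 = x /\ g 1 = x.

Lemma has_winding_ext x g g' n : (forall s, g s = g' s) -> has_winding x g n -> has_winding x g' n.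
Proof. intros E H. replace g' with g; auto. apply functional_extensionality; auto. Qed.

Lemma has_winding_linear x c : has_winding x (fun s => rot x (2 * PI * IZR c * clamp s)) c.
Proof.
  exists (fun s => 2 * PI * IZR c * clamp s). repeat split.
  - intros s. apply cont_mult; [apply cont_const | apply cont_clamp, cont_id].
  - rewrite clamp_id by lra. ring.
  - rewrite clamp_id by lra. ring.
Qed.

(* Two lifts of uniformly close paths differ by [ang] up to a multiple of [2 pi]
   that depends continuously on [s], hence is constant. *)
Lemma has_winding_close x g g' n m : on_circle x -> has_winding x g n -> has_winding x g' m ->
  (forall s, 0 <= s <= 1 -> deucl (g s) (g' s) < 1) -> n = m.
Proof.
  intros Hx [th [C [Rth [Z O]]]] [th' [C' [Rth' [Z' O']]]] Hcl.
  pose proof PI_RGT_0 as HPI.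
  assert (Hang : forall s, ang (g s) (g' s) = atan (sin (th' s - th s) / cos (th s - th' s))).
  { intros s. rewrite <- Rth, <- Rth'. unfold ang. rewrite dot_rot, cross_rot by auto. reflexivity. }
  assert (Hcirc : forall s, on_circle (g s) /\ on_circle (g' s)).
  { intros s. rewrite <- Rth, <- Rth'. split; apply rot_circle; auto. }
  assert (Hdot : forall s, 0 <= s <= 1 -> 1/2 < cos (th s - th' s)).
  { intros s Hs. rewrite <- (dot_rot x) by auto. rewrite Rth, Rth'.
    apply dot_gt_half; try apply Hcirc; auto. }
  set (f := fun s => (th' s - th s - ang (g s) (g' s)) / (2 * PI)).
  assert (Hf : f 0 = f 1).
  { apply int_valued_continuous_const.
    - intros t Ht. apply continuity_pt_on_unit. unfold f.
      apply cont_div; [| apply cont_const | lra].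
      apply (cont_ext (fun s => th' s - th s - atan (sin (th' s - th s) / cos (th s - th' s)))).
      { intros s; rewrite Hang; auto. }
      apply cont_minus; [apply cont_minus; auto|].
      apply cont_atan, cont_div; [apply cont_sin, cont_minus; auto | apply cont_cos, cont_minus; auto|].
      specialize (Hdot t Ht). lra.
    - intros t Ht.
      assert (E : rot x (th t + ang (g t) (g' t)) = rot x (th' t)).
      { rewrite <- rot_rot, Rth, Rth'. destruct (Hcirc t).
        apply rot_ang; auto. pose proof (dot_gt_half _ _ H H0 (Hcl t Ht)). lra. }
      destruct (rot_inj_mod_2PI x _ _ Hx E) as [k Hk]. exists (- k)%Z. unfold f. rewrite opp_IZR.
      field_simplify_eq; lra. }
  assert (Ends : forall s, s = 0 \/ s = 1 -> g s = x /\ g' s = x).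
  { intros s [-> | ->]; rewrite <- Rth, <- Rth'.
    - rewrite Z, Z'. split; apply rot_0.
    - rewrite O, O'. split; apply rot_2PI_int. }
  unfold f in Hf.
  rewrite (proj1 (Ends 0 (or_introl eq_refl))), (proj2 (Ends 0 (or_introl eq_refl))) in Hf.
  rewrite (proj1 (Ends 1 (or_intror eq_refl))), (proj2 (Ends 1 (or_intror eq_refl))) in Hf.
  rewrite ang_refl, Z, Z', O, O' in Hf.
  apply eq_IZR. apply (Rmult_eq_reg_l (2 * PI)); [|lra].
  apply (Rmult_eq_reg_r (/ (2 * PI))); [|apply Rinv_neq_0_compat; lra].
  unfold Rdiv in Hf. lra.
Qed.

Lemma has_winding_unique x g n m : on_circle x -> has_winding x g n -> has_winding x g m -> n = m.
Proof.
  intros Hx Hn Hm. apply (has_winding_close x g g n m Hx Hn Hm).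
  intros s _. rewrite deucl_refl. lra.
Qed.

Lemma circle_path_mesh x g : circle_path x g -> exists N : nat, (0 < N)%nat /\
  forall s s', Rabs (s - s') <= / INR N -> deucl (g s) (g s') < 1.
Proof.
  intros [Hc [Hcl [Hct _]]].
  destruct (Heine_cor2 (f := fun s => fst (g s)) (a := 0) (b := 1) (fun s _ => proj1 (Hct s))
    (mkposreal (1/2) ltac:(lra))) as [d1 H1].
  destruct (Heine_cor2 (f := fun s => snd (g s)) (a := 0) (b := 1) (fun s _ => proj2 (Hct s))
    (mkposreal (1/2) ltac:(lra))) as [d2 H2].
  simpl in *.
  destruct (archimed_cor1 (Rmin d1 d2)) as [N [HN HN0]].
  { destruct d1, d2; simpl; unfold Rmin; destruct Rle_dec; lra. }
  exists N; split; auto. intros s s' Hs.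
  rewrite (Hcl s), (Hcl s').
  assert (Hd : Rabs (clamp s - clamp s') < Rmin d1 d2) by (eapply Rle_lt_trans; [apply clamp_lipschitz | lra]).
  specialize (H1 _ _ (clamp_range s) (clamp_range s') (Rlt_le_trans _ _ _ Hd (Rmin_l _ _))).
  specialize (H2 _ _ (clamp_range s) (clamp_range s') (Rlt_le_trans _ _ _ Hd (Rmin_r _ _))).
  eapply Rle_lt_trans; [apply deucl_le_abs_sum | lra].
Qed.

Section AngleLift.

Variables (x : R * R) (g : R -> R * R) (N : nat).
Hypotheses (Hx : on_circle x) (Hg : circle_path x g) (HN : (0 < N)%nat).
Hypothesis Hmesh : forall s s', Rabs (s - s') <= / INR N -> deucl (g s) (g s') < 1.

(* Consecutive points of the subdivision of [[0, s]] at the [i/N] are close, so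
   [ang] measures the angle between them; summing gives a continuous lift. *)
Fixpoint lift_sum (j : nat) (s : R) : R :=
  match j with
  | O => 0
  | S j => lift_sum j s + ang (g (Rmin s (INR j / INR N))) (g (Rmin s (INR (S j) / INR N)))
  end.

Lemma lift_sum_step_dot_pos j s : 0 < dot (g (Rmin s (INR j / INR N))) (g (Rmin s (INR (S j) / INR N))).
Proof.
  destruct Hg as [Hc _]. pose proof (lt_0_INR N HN).
  assert (1/2 < dot (g (Rmin s (INR j / INR N))) (g (Rmin s (INR (S j) / INR N)))); [|lra].
  apply dot_gt_half; auto. apply Hmesh.
  rewrite (Rmin_comm s), (Rmin_comm s). eapply Rle_trans; [apply Rmin_lipschitz|].
  rewrite S_INR. replace (INR j / INR N - (INR j + 1) / INR N) with (- / INR N) by (field; lra).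
  rewrite Rabs_Ropp, Rabs_pos_eq; [lra | left; apply Rinv_0_lt_compat; auto].
Qed.

Lemma lift_sum_rot j s : rot x (lift_sum j s) = g (Rmin s (INR j / INR N)).
Proof.
  destruct Hg as [Hc [Hcl [_ [H0 _]]]]. pose proof (lt_0_INR N HN).
  induction j; cbn [lift_sum].
  - rewrite rot_0, Hcl. simpl INR. replace (0 / INR N) with 0 by (field; lra).
    rewrite <- H0. f_equal. unfold clamp, Rmin, Rmax; repeat destruct Rle_dec; lra.
  - rewrite <- rot_rot, IHj. apply rot_ang; auto. apply lift_sum_step_dot_pos.
Qed.

Lemma lift_sum_cont j s : continuity_pt (lift_sum j) s.
Proof.
  destruct Hg as [_ [_ [Hct _]]].
  induction j; cbn [lift_sum]; [apply cont_const|].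
  apply cont_plus; auto. unfold ang.
  assert (Cf : forall a, continuity_pt (fun s => fst (g (Rmin s a))) s).
  { intros a. apply (cont_comp (fun s => Rmin s a) (fun z => fst (g z))); [apply cont_Rmin, cont_id | apply Hct]. }
  assert (Cs : forall a, continuity_pt (fun s => snd (g (Rmin s a))) s).
  { intros a. apply (cont_comp (fun s => Rmin s a) (fun z => snd (g z))); [apply cont_Rmin, cont_id | apply Hct]. }
  apply cont_atan. unfold cross, dot. apply cont_div.
  - apply cont_minus; apply cont_mult; auto.
  - apply cont_plus; apply cont_mult; auto.
  - pose proof (lift_sum_step_dot_pos j s) as Hpos. unfold dot in Hpos. cbv beta. lra.
Qed.

Lemma lift_sum_at0 j : lift_sum j 0 = 0.
Proof.
  pose proof (lt_0_INR N HN). induction j; cbn [lift_sum]; auto.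
  assert (E : forall a, 0 <= a -> Rmin 0 a = 0) by (intros a Ha; unfold Rmin; destruct Rle_dec; lra).
  rewrite IHj, !E, ang_refl by (apply Rdiv_le_0_compat; auto; apply pos_INR). ring.
Qed.

Lemma lift_sum_has_winding : exists n, has_winding x g n.
Proof.
  destruct Hg as [_ [Hcl [_ [_ H1]]]]. pose proof (lt_0_INR N HN).
  assert (Rth : forall s, rot x (lift_sum N s) = g s).
  { intros s. rewrite lift_sum_rot. replace (INR N / INR N) with 1 by (field; lra).
    rewrite Hcl, (Hcl s). f_equal. unfold clamp, Rmin, Rmax; repeat destruct Rle_dec; lra. }
  assert (E1 : rot x (lift_sum N 1) = rot x 0) by (rewrite Rth, H1, rot_0; auto).
  destruct (rot_inj_mod_2PI x _ _ Hx E1) as [k Hk]. exists k, (lift_sum N).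
  repeat split; auto.
  - apply lift_sum_cont.
  - apply lift_sum_at0.
  - lra.
Qed.

End AngleLift.

Lemma has_winding_exists x g : on_circle x -> circle_path x g -> exists n, has_winding x g n.
Proof.
  intros Hx Hg. destruct (circle_path_mesh x g Hg) as [N [HN Hm]].
  exact (lift_sum_has_winding x g N Hx Hg HN Hm).
Qed.

(** * Winding numbers of loops in the infinite torus *)

Lemma loop_clamp xb l : is_loop xb l -> forall s, l s = l (clamp s).
Proof.
  intros [_ [Hout [H0 [H1 _]]]] s. destruct (classic (unit_int s)) as [Hs|Hs].
  - rewrite clamp_id; auto.
  - rewrite Hout by auto. destruct (clamp_out s Hs) as [E|E]; rewrite E; auto.
Qed.

Lemma dT_continuous_coord (F : R -> nat -> R * R) k s0 :
  (forall eps, 0 < eps -> exists d, 0 < d /\ forall s, Rabs (s - s0) < d -> dT (F s0) (F s) < eps) ->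
  continuity_pt (fun s => fst (F s k)) s0 /\ continuity_pt (fun s => snd (F s k)) s0.
Proof.
  intros H. split; apply continuity_pt_of_eps_delta; intros eps Heps;
  destruct (H ((/2)^k * Rmin eps 1)) as [d [Hd Hd']];
  try (apply Rmult_lt_0_compat; [apply pow_half_pos | unfold Rmin; destruct Rle_dec; lra]);
  exists d; split; auto; intros s Hs; specialize (Hd' s Hs);
  apply dT_lt_coord in Hd'; try apply Rmin_r; rewrite Rabs_minus_sym.
  - eapply Rle_lt_trans; [apply deucl_fst_le | eapply Rlt_le_trans; eauto; apply Rmin_l].
  - eapply Rle_lt_trans; [apply deucl_snd_le | eapply Rlt_le_trans; eauto; apply Rmin_l].
Qed.

Lemma loop_coord_path x l k : is_loop (const_seq x) l -> circle_path x (fun s => l s k).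
Proof.
  intros Hl. pose proof (loop_clamp _ _ Hl) as Hcl.
  destruct Hl as [HT [Hout [H0 [H1 Hc]]]].
  split; [|split; [|split; [|split]]].
  - intros s; apply HT.
  - intros s; rewrite Hcl; auto.
  - intros s. apply (dT_continuous_coord l k s).
    intros eps Heps. destruct (Hc (clamp s) eps (clamp_range s) Heps) as [d [Hd Hd']].
    exists d; split; auto. intros s' Hs'. rewrite (Hcl s), (Hcl s'). apply Hd'; [apply clamp_range|].
    rewrite Rabs_minus_sym. eapply Rle_lt_trans; [apply clamp_lipschitz | auto].
  - simpl. rewrite H0; reflexivity.
  - simpl. rewrite H1; reflexivity.
Qed.

(* The sequence of winding numbers of the coordinates of [l]; this is the
   isomorphism [pi_1(T^oo) = prod_omega Z] on the level of loops. *)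
Definition wind (x : R * R) (l : R -> nat -> R * R) (k : nat) : Z :=
  epsilon (inhabits 0%Z) (fun n => has_winding x (fun s => l s k) n).

Lemma wind_spec x l k : on_circle x -> is_loop (const_seq x) l ->
  has_winding x (fun s => l s k) (wind x l k).
Proof.
  intros Hx Hl. unfold wind. apply epsilon_spec.
  apply has_winding_exists; auto. apply loop_coord_path; auto.
Qed.

(* By compactness of [[0,1]] (Bolzano-Weierstrass), a map continuous on the square
   keeps all slices uniformly close to the slice at [t0] for [t] near [t0]. *)
Lemma tube (F : R -> R -> R * R) :
  (forall s t, 0 <= s <= 1 -> 0 <= t <= 1 -> forall eps, 0 < eps -> exists d, 0 < d /\
     forall s' t', 0 <= s' <= 1 -> 0 <= t' <= 1 -> Rabs (s - s') < d -> Rabs (t - t') < d ->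
       deucl (F s t) (F s' t') < eps) ->
  forall t0, 0 <= t0 <= 1 -> exists eta, 0 < eta /\ forall t, 0 <= t <= 1 -> Rabs (t - t0) < eta ->
    forall s, 0 <= s <= 1 -> deucl (F s t) (F s t0) < 1.
Proof.
  intros Hc t0 Ht0. apply NNPP. intros Hno.
  assert (Hex : forall m : nat, exists p : R * R, (0 <= fst p <= 1) /\ (0 <= snd p <= 1) /\
     Rabs (snd p - t0) < / (INR m + 1) /\ 1 <= deucl (F (fst p) (snd p)) (F (fst p) t0)).
  { intros m. apply NNPP. intros Hm. apply Hno. exists (/ (INR m + 1)). split.
    - apply Rinv_0_lt_compat. pose proof (pos_INR m); lra.
    - intros t Ht Htt s Hs. apply Rnot_le_lt. intros Hle. apply Hm. exists (s, t). simpl. auto. }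
  destruct (choice _ Hex) as [sq Hsq].
  destruct (Bolzano_Weierstrass (fun m => fst (sq m)) (fun c => 0 <= c <= 1) (compact_P3 0 1)) as [l Hl].
  { intros n; apply Hsq. }
  destruct (Hc (clamp l) t0 (clamp_range l) Ht0 (1/2)) as [d [Hd Hd']]; [lra|].
  destruct (archimed_cor1 d Hd) as [N [HN HN0]].
  destruct (Hl (disc l (mkposreal d Hd)) N) as [p [Hp Vp]].
  { exists (mkposreal d Hd). intros y Hy; auto. }
  unfold disc in Vp; simpl in Vp.
  destruct (Hsq p) as [Hs [Ht [Htt Hbad]]].
  assert (Hcs : Rabs (clamp l - fst (sq p)) < d).
  { rewrite <- (clamp_id (fst (sq p))) by auto. eapply Rle_lt_trans; [apply clamp_lipschitz|].
    rewrite Rabs_minus_sym; auto. }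
  assert (Htp : Rabs (t0 - snd (sq p)) < d).
  { rewrite Rabs_minus_sym. eapply Rlt_trans; [apply Htt|].
    apply Rle_lt_trans with (/ INR N); auto. apply Rinv_le_contravar; [apply lt_0_INR; lia|].
    apply le_INR in Hp. lra. }
  pose proof (Hd' _ _ Hs Ht Hcs Htp) as A1.
  assert (A2 : deucl (F (clamp l) t0) (F (fst (sq p)) t0) < 1/2).
  { apply Hd'; auto. rewrite Rminus_diag, Rabs_R0; auto. }
  pose proof (deucl_triangle (F (fst (sq p)) (snd (sq p))) (F (clamp l) t0) (F (fst (sq p)) t0)).
  rewrite deucl_sym in A1. lra.
Qed.

Section HomotopyInvariance.

Variables (x : R * R) (H : R -> R -> nat -> R * R) (k : nat).
Hypothesis Hx : on_circle x.
Hypothesis H_torus : forall s t, unit_int s -> unit_int t -> in_torus (H s t).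
Hypothesis H_ends : forall t, unit_int t -> H 0 t = const_seq x /\ H 1 t = const_seq x.
Hypothesis H_cont : forall s t eps, unit_int s -> unit_int t -> 0 < eps -> exists delta, 0 < delta /\
  forall s' t', unit_int s' -> unit_int t' -> Rabs (s - s') < delta -> Rabs (t - t') < delta ->
    dT (H s t) (H s' t') < eps.

Lemma homotopy_coord_cont s t : 0 <= s <= 1 -> 0 <= t <= 1 -> forall eps, 0 < eps -> exists d, 0 < d /\
  forall s' t', 0 <= s' <= 1 -> 0 <= t' <= 1 -> Rabs (s - s') < d -> Rabs (t - t') < d ->
    deucl (H s t k) (H s' t' k) < eps.
Proof.
  intros Hs Ht eps Heps.
  destruct (H_cont s t ((/2)^k * Rmin eps 1) Hs Ht) as [d [Hd Hd']].
  { apply Rmult_lt_0_compat; [apply pow_half_pos | unfold Rmin; destruct Rle_dec; lra]. }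
  exists d; split; auto. intros s' t' Hs' Ht' E1 E2. specialize (Hd' s' t' Hs' Ht' E1 E2).
  apply dT_lt_coord in Hd'; [|apply Rmin_r]. eapply Rlt_le_trans; eauto. apply Rmin_l.
Qed.

Definition slice (t : R) : R -> R * R := fun s => H (clamp s) (clamp t) k.

Lemma slice_path t : circle_path x (slice t).
Proof.
  unfold slice. split; [|split; [|split; [|split]]].
  - intros s. apply H_torus; apply clamp_range.
  - intros s. rewrite clamp_idem; auto.
  - intros s.
    assert (Hcs : forall eps, 0 < eps -> exists d, 0 < d /\ forall s', Rabs (s' - s) < d ->
              deucl (H (clamp s) (clamp t) k) (H (clamp s') (clamp t) k) < eps).
    { intros eps Heps.
      destruct (homotopy_coord_cont (clamp s) (clamp t) (clamp_range s) (clamp_range t) eps Heps)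
        as [d [Hd Hd']].
      exists d; split; auto. intros s' Hs'. apply Hd'; try apply clamp_range.
      - rewrite Rabs_minus_sym. eapply Rle_lt_trans; [apply clamp_lipschitz | auto].
      - rewrite Rminus_diag, Rabs_R0; auto. }
    split; apply continuity_pt_of_eps_delta; intros eps Heps; destruct (Hcs eps Heps) as [d [Hd Hd']];
      exists d; split; auto; intros s' Hs'; rewrite Rabs_minus_sym; eapply Rle_lt_trans;
      [apply deucl_fst_le | apply Hd'; auto | apply deucl_snd_le | apply Hd'; auto].
  - rewrite clamp_id by lra. destruct (H_ends (clamp t) (clamp_range t)) as [E _]. rewrite E; reflexivity.
  - rewrite (clamp_id 1) by lra. destruct (H_ends (clamp t) (clamp_range t)) as [_ E]. rewrite E; reflexivity.
Qed.

Definition slice_winding (t : R) : Z := epsilon (inhabits 0%Z) (fun m => has_winding x (slice t) m).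

Lemma slice_winding_spec t : has_winding x (slice t) (slice_winding t).
Proof. unfold slice_winding. apply epsilon_spec, has_winding_exists; auto. apply slice_path. Qed.

(* Locally constant by the tube lemma, hence constant. *)
Lemma slice_winding_0_1 : slice_winding 0 = slice_winding 1.
Proof.
  apply eq_IZR, (int_valued_continuous_const (fun t => IZR (slice_winding t))).
  - intros t0 Ht0 eps Heps.
    destruct (tube (fun s t => H s t k) homotopy_coord_cont t0 Ht0) as [eta [Heta Htube]].
    exists eta; split; auto. intros t' Ht' Htt.
    assert (E : slice_winding t' = slice_winding t0).
    { apply (has_winding_close x (slice t') (slice t0)); auto using slice_winding_spec.
      intros s Hs. unfold slice. rewrite (clamp_id t'), (clamp_id t0), (clamp_id s) by auto.
      apply Htube; auto. }
    rewrite E, Rminus_diag, Rabs_R0; auto.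
  - intros t _. exists (slice_winding t); auto.
Qed.

End HomotopyInvariance.

Lemma homotopic_wind_eq x l n : on_circle x -> is_loop (const_seq x) l ->
  loop_homotopic (const_seq x) l (wind_loop x n) -> wind x l = n.
Proof.
  intros Hx Hl [H [HT [H0 [H1 [Hb Hc]]]]]. apply functional_extensionality; intros k.
  assert (A0 : wind x l k = slice_winding x H k 0).
  { apply (has_winding_unique x (fun s => l s k)); auto using wind_spec.
    apply (has_winding_ext x (slice H k 0)); [|apply slice_winding_spec; auto].
    intros s. unfold slice. rewrite (clamp_id 0) by lra.
    rewrite H0 by apply clamp_range. rewrite <- (loop_clamp _ _ Hl). auto. }
  assert (A1 : slice_winding x H k 1 = n k).
  { apply (has_winding_unique x (slice H k 1)); auto using slice_winding_spec.
    apply (has_winding_ext x (fun s => rot x (2 * PI * IZR (n k) * clamp s))); [|apply has_winding_linear].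
    intros s. unfold slice. rewrite (clamp_id 1) by lra. rewrite H1 by apply clamp_range. reflexivity. }
  rewrite A0, <- A1. apply slice_winding_0_1; auto.
Qed.

Lemma straight_line_cont2 (th : R -> R) c s t : continuity_pt th s -> 0 <= s <= 1 ->
  forall e, 0 < e -> exists d, 0 < d /\ forall s' t', 0 <= s' <= 1 -> 0 <= t' <= 1 -> 0 <= t <= 1 ->
    Rabs (s - s') < d -> Rabs (t - t') < d ->
    Rabs (((1 - t) * th s + t * (c * s)) - ((1 - t') * th s' + t' * (c * s'))) < e.
Proof.
  intros Hth Hs e He.
  destruct (continuity_pt_eps_delta th s Hth (e/3)) as [d1 [Hd1 H1]]; [lra|].
  set (M := Rabs (th s) + 2 * Rabs c + 1).
  pose proof (Rabs_pos (th s)); pose proof (Rabs_pos c).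
  assert (HM : 0 < M) by (unfold M; lra).
  exists (Rmin d1 (e / (3 * M))). split.
  { unfold Rmin; destruct Rle_dec; try lra. apply Rdiv_lt_0_compat; lra. }
  intros s' t' Hs' Ht' Ht Es Et.
  assert (Es1 : Rabs (s' - s) < d1).
  { rewrite Rabs_minus_sym. eapply Rlt_le_trans; [exact Es | apply Rmin_l]. }
  assert (Es2 : Rabs (s - s') < e / (3 * M)) by (eapply Rlt_le_trans; [exact Es | apply Rmin_r]).
  assert (Et2 : Rabs (t - t') < e / (3 * M)) by (eapply Rlt_le_trans; [exact Et | apply Rmin_r]).
  specialize (H1 s' Es1). rewrite Rabs_minus_sym in H1.
  replace (((1 - t) * th s + t * (c * s)) - ((1 - t') * th s' + t' * (c * s')))
    with ((1 - t') * (th s - th s') + (t' - t) * th s + c * (t * (s - s') + (t - t') * s')) by ring.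
  assert (B1 : Rabs ((1 - t') * (th s - th s')) <= e / 3).
  { rewrite Rabs_mult, Rabs_pos_eq by lra. pose proof (Rabs_pos (th s - th s')). nra. }
  assert (B2 : Rabs ((t' - t) * th s) <= Rabs (t - t') * Rabs (th s)).
  { rewrite Rabs_mult, (Rabs_minus_sym t'); lra. }
  assert (B3 : Rabs (c * (t * (s - s') + (t - t') * s')) <= Rabs c * (Rabs (s - s') + Rabs (t - t'))).
  { rewrite Rabs_mult. apply Rmult_le_compat_l; [apply Rabs_pos|].
    eapply Rle_trans; [apply Rabs_triang|]. rewrite !Rabs_mult, (Rabs_pos_eq t), (Rabs_pos_eq s') by lra.
    pose proof (Rabs_pos (s - s')); pose proof (Rabs_pos (t - t')). nra. }
  pose proof (Rabs_triang ((1 - t') * (th s - th s') + (t' - t) * th s) (c * (t * (s - s') + (t - t') * s'))).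
  pose proof (Rabs_triang ((1 - t') * (th s - th s')) ((t' - t) * th s)).
  assert (B4 : Rabs (t - t') * Rabs (th s) + Rabs c * (Rabs (s - s') + Rabs (t - t')) <= M * (e / (3 * M))).
  { pose proof (Rabs_pos (s - s')); pose proof (Rabs_pos (t - t')).
    assert (Rabs (t - t') * Rabs (th s) <= e / (3 * M) * Rabs (th s)) by nra.
    assert (Rabs c * Rabs (s - s') <= Rabs c * (e / (3 * M))) by nra.
    assert (Rabs c * Rabs (t - t') <= Rabs c * (e / (3 * M))) by nra.
    unfold M at 1. nra. }
  replace (M * (e / (3 * M))) with (e / 3) in B4 by (field; lra).
  lra.
Qed.

Definition angle_lift (x : R * R) (l : R -> nat -> R * R) (k : nat) : R -> R :=
  epsilon (inhabits (fun _ : R => 0)) (fun th => (forall s, continuity_pt th s) /\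
    (forall s, rot x (th s) = l s k) /\ th 0 = 0 /\ th 1 = 2 * PI * IZR (wind x l k)).

Lemma angle_lift_spec x l k : on_circle x -> is_loop (const_seq x) l ->
  (forall s, continuity_pt (angle_lift x l k) s) /\ (forall s, rot x (angle_lift x l k s) = l s k) /\
    angle_lift x l k 0 = 0 /\ angle_lift x l k 1 = 2 * PI * IZR (wind x l k).
Proof. intros Hx Hl. unfold angle_lift. apply epsilon_spec. apply wind_spec; auto. Qed.

(* Straight-line homotopy between the angle lifts of [l] and of the standard loop. *)
Lemma homotopic_wind_loop x l : on_circle x -> is_loop (const_seq x) l ->
  loop_homotopic (const_seq x) l (wind_loop x (wind x l)).
Proof.
  intros Hx Hl. set (th := angle_lift x l). set (c := fun k => 2 * PI * IZR (wind x l k)).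
  exists (fun s t k => rot x ((1 - t) * th k s + t * (c k * s))).
  split; [|split; [|split; [|split]]].
  - intros s t _ _ k. apply rot_circle; auto.
  - intros s _. apply functional_extensionality; intros k.
    destruct (angle_lift_spec x l k Hx Hl) as [_ [R _]].
    rewrite <- R. f_equal. unfold th. ring.
  - intros s _. apply functional_extensionality; intros k. unfold wind_loop, c. f_equal. ring.
  - intros t _. split; apply functional_extensionality; intros k;
      destruct (angle_lift_spec x l k Hx Hl) as [_ [_ [Z O]]]; unfold const_seq, th, c.
    + rewrite Z. replace ((1 - t) * 0 + t * (2 * PI * IZR (wind x l k) * 0)) with 0 by ring.
      apply rot_0.
    + rewrite O. replace ((1 - t) * (2 * PI * IZR (wind x l k)) + t * (2 * PI * IZR (wind x l k) * 1))
        with (2 * PI * IZR (wind x l k)) by ring. apply rot_2PI_int.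
  - intros s t eps Hs Ht Heps.
    destruct (dT_small_of_coords
      (fun k => rot x ((1 - t) * th k s + t * (c k * s)))
      (fun nu k => rot x ((1 - snd nu) * th k (fst nu) + snd nu * (c k * fst nu)))
      (fun nu d => unit_int (fst nu) /\ unit_int (snd nu) /\ Rabs (s - fst nu) < d /\ Rabs (t - snd nu) < d))
      with (eps := eps) as [d [Hd Hd']]; auto.
    + intros nu d d' _ Hle [A [B [C D]]]. split; [|split; [|split]]; auto; lra.
    + intros k e He. destruct (angle_lift_spec x l k Hx Hl) as [C _].
      destruct (straight_line_cont2 (th k) (c k) s t (C s) Hs e He) as [d [Hd Hd']].
      exists d; split; auto. intros [s' t'] [A [B [E1 E2]]]. simpl in *.
      eapply Rle_lt_trans; [apply deucl_rot_le; auto | apply Hd'; auto].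
    + exists d; split; auto. intros s' t' Hs' Ht' E1 E2. apply (Hd' (s', t')). simpl; auto.
Qed.

Lemma loops_in_iff x G (l : loop_space (const_seq x)) : on_circle x ->
  loops_in x G l <-> G (wind x (proj1_sig l)).
Proof.
  intros Hx. destruct l as [l Hl]. unfold loops_in; simpl. split.
  - intros [n [Gn Hh]]. rewrite (homotopic_wind_eq x l n); auto.
  - intros G1. exists (wind x l). split; auto. apply homotopic_wind_loop; auto.
Qed.

(** * The loop space is a Polish space *)

Lemma dL_spec xb (l0 l1 : loop_space xb) :
  (forall s, unit_int s -> dT (proj1_sig l0 s) (proj1_sig l1 s) <= dL l0 l1) /\
  (forall M, (forall s, unit_int s -> dT (proj1_sig l0 s) (proj1_sig l1 s) <= M) -> dL l0 l1 <= M).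
Proof.
  unfold dL. set (E := fun r => exists s, unit_int s /\ r = dT (proj1_sig l0 s) (proj1_sig l1 s)).
  destruct (Lub_Rbar_correct E) as [Hub Hlub].
  assert (Hb : Rbar_le (Lub_Rbar E) 2) by (apply Hlub; intros r [s [_ ->]]; apply dT_le2).
  assert (He : Rbar_le (dT (proj1_sig l0 0) (proj1_sig l1 0)) (Lub_Rbar E)).
  { apply Hub. exists 0. split; [unfold unit_int; lra | auto]. }
  destruct (Lub_Rbar E) as [r| |]; simpl in *; try contradiction.
  split.
  - intros s Hs. apply (Hub (dT (proj1_sig l0 s) (proj1_sig l1 s))). exists s; auto.
  - intros M HM. apply (Hlub M). intros z [s [Hs ->]]. simpl. auto.
Qed.

Lemma dL_ge xb (l0 l1 : loop_space xb) s : unit_int s -> dT (proj1_sig l0 s) (proj1_sig l1 s) <= dL l0 l1.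
Proof. apply dL_spec. Qed.

Lemma dL_le xb (l0 l1 : loop_space xb) M :
  (forall s, unit_int s -> dT (proj1_sig l0 s) (proj1_sig l1 s) <= M) -> dL l0 l1 <= M.
Proof. apply dL_spec. Qed.

Lemma dL_nonneg xb (l0 l1 : loop_space xb) : 0 <= dL l0 l1.
Proof. eapply Rle_trans; [apply dT_nonneg | apply (dL_ge _ _ _ 0)]. unfold unit_int; lra. Qed.

Lemma dL_ge_everywhere xb (l0 l1 : loop_space xb) s : dT (proj1_sig l0 s) (proj1_sig l1 s) <= dL l0 l1.
Proof.
  destruct (classic (unit_int s)) as [Hs|Hs]; [apply dL_ge; auto|].
  pose proof (proj2_sig l0) as [_ [Q0 _]]; pose proof (proj2_sig l1) as [_ [Q1 _]].
  rewrite Q0, Q1, dT_refl by auto. apply dL_nonneg.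
Qed.

Lemma dL_metric xb : is_metric (@dL xb).
Proof.
  split; [|split; [|split]].
  - apply dL_nonneg.
  - intros l0 l1. split.
    + intros H. destruct l0 as [f0 P0], l1 as [f1 P1]. apply subset_eq_compat.
      apply functional_extensionality; intros s. destruct (classic (unit_int s)).
      * apply dT_eq0, Rle_antisym; [|apply dT_nonneg].
        rewrite <- H. apply (dL_ge _ (exist _ f0 P0) (exist _ f1 P1)); auto.
      * pose proof P0 as [_ [E0 _]]; pose proof P1 as [_ [E1 _]]. rewrite E0, E1; auto.
    + intros ->. apply Rle_antisym; [|apply dL_nonneg]. apply dL_le. intros; rewrite dT_refl; lra.
  - intros l0 l1. apply Rle_antisym; apply dL_le; intros s Hs; rewrite dT_sym; apply dL_ge; auto.
  - intros l0 l1 l2. apply dL_le. intros s Hs. eapply Rle_trans; [apply (dT_triangle _ (proj1_sig l1 s))|].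
    pose proof (dL_ge _ l0 l1 s Hs); pose proof (dL_ge _ l1 l2 s Hs); lra.
Qed.

Lemma cauchy_is_lim_seq (v : nat -> R) :
  (forall eps, 0 < eps -> exists N, forall n m, (N <= n)%nat -> (N <= m)%nat -> Rabs (v n - v m) < eps) ->
  is_lim_seq v (real (Lim_seq v)).
Proof.
  intros H. apply Lim_seq_correct', ex_lim_seq_cauchy_corr.
  intros [e He]. simpl. apply H; auto.
Qed.

Section LoopCompleteness.

Variables (xb : nat -> R * R) (u : nat -> loop_space xb).
Hypothesis u_cauchy : forall eps, 0 < eps -> exists N, forall m n, (N <= m)%nat -> (N <= n)%nat ->
  dL (u m) (u n) < eps.

Let U n := proj1_sig (u n).

Lemma coord_cauchy s k e : 0 < e ->
  exists N, forall n m, (N <= n)%nat -> (N <= m)%nat -> deucl (U n s k) (U m s k) < e.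
Proof.
  intros He. destruct (u_cauchy ((/2)^k * Rmin e 1)) as [N HN].
  { apply Rmult_lt_0_compat; [apply pow_half_pos | unfold Rmin; destruct Rle_dec; lra]. }
  exists N. intros n m Hn Hm. pose proof (dL_ge_everywhere _ (u n) (u m) s).
  eapply Rlt_le_trans; [|apply (Rmin_l e 1)].
  apply dT_lt_coord; [apply Rmin_r|]. specialize (HN n m Hn Hm). unfold U. lra.
Qed.

Definition limit_loop (s : R) (k : nat) : R * R :=
  (real (Lim_seq (fun n => fst (U n s k))), real (Lim_seq (fun n => snd (U n s k)))).

Lemma limit_loop_is_lim s k :
  is_lim_seq (fun n => fst (U n s k)) (fst (limit_loop s k)) /\
  is_lim_seq (fun n => snd (U n s k)) (snd (limit_loop s k)).
Proof.
  split; apply cauchy_is_lim_seq; intros e He; destruct (coord_cauchy s k e He) as [N HN];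
    exists N; intros n m Hn Hm; eapply Rle_lt_trans; [apply deucl_fst_le | auto | apply deucl_snd_le | auto].
Qed.

Lemma limit_loop_pointwise s k e : 0 < e ->
  exists N, forall n, (N <= n)%nat -> deucl (U n s k) (limit_loop s k) < e.
Proof.
  intros He. destruct (limit_loop_is_lim s k) as [L1 L2].
  apply is_lim_seq_Reals in L1, L2.
  destruct (L1 (e/2)) as [N1 H1]; [lra|]. destruct (L2 (e/2)) as [N2 H2]; [lra|].
  exists (max N1 N2). intros n Hn. eapply Rle_lt_trans; [apply deucl_le_abs_sum|].
  specialize (H1 n ltac:(lia)). specialize (H2 n ltac:(lia)). unfold R_dist in *. lra.
Qed.

Lemma limit_loop_uniform eps : 0 < eps ->
  exists N, forall n s, (N <= n)%nat -> dT (U n s) (limit_loop s) <= eps.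
Proof.
  intros Heps. destruct (pow_half_small (eps / 2)) as [K HK]; [lra|].
  set (e := Rmin 1 (eps / 12)).
  assert (He : 0 < e) by (unfold e, Rmin; destruct Rle_dec; lra).
  assert (He1 : e <= 1) by apply Rmin_l.
  assert (He2 : e <= eps / 12) by apply Rmin_r.
  destruct (u_cauchy ((/2)^K * e)) as [N HN]; [apply Rmult_lt_0_compat; auto; apply pow_half_pos|].
  exists N. intros n s Hn.
  eapply Rle_trans; [apply (dT_le_prefix _ _ K (3 * e)); [lra|] | lra].
  intros k Hk. destruct (limit_loop_pointwise s k e He) as [M HM].
  set (m := max M N).
  pose proof (HM m ltac:(unfold m; lia)).
  assert (deucl (U n s k) (U m s k) < e).
  { apply dT_lt_coord; auto. eapply Rle_lt_trans; [apply dL_ge_everywhere|].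
    eapply Rlt_le_trans; [apply HN; unfold m; lia|].
    apply Rmult_le_compat_r; [lra | apply pow_half_le; lia]. }
  pose proof (deucl_triangle (U n s k) (U m s k) (limit_loop s k)). lra.
Qed.

Lemma limit_loop_const s : (forall n, U n s = xb) -> limit_loop s = xb.
Proof.
  intros H. apply functional_extensionality; intros k. unfold limit_loop.
  assert (E1 : forall n, fst (U n s k) = fst (xb k)) by (intros n; rewrite H; auto).
  assert (E2 : forall n, snd (U n s k) = snd (xb k)) by (intros n; rewrite H; auto).
  rewrite (Lim_seq_ext _ _ E1), (Lim_seq_ext _ _ E2), !Lim_seq_const. destruct (xb k); auto.
Qed.

Lemma limit_loop_is_loop : is_loop xb limit_loop.
Proof.
  assert (HU : forall n, is_loop xb (U n)) by (intros n; exact (proj2_sig (u n))).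
  split; [|split; [|split; [|split]]].
  - intros s k. destruct (limit_loop_is_lim s k) as [C1 C2].
    pose proof (is_lim_seq_plus' _ _ _ _ (is_lim_seq_mult' _ _ _ _ C1 C1) (is_lim_seq_mult' _ _ _ _ C2 C2)) as C3.
    apply (is_lim_seq_ext _ (fun _ => 1)) in C3.
    + apply is_lim_seq_unique in C3. rewrite Lim_seq_const in C3. injection C3; intros.
      unfold on_circle. simpl. lra.
    + intros n. destruct (HU n) as [HT _]. specialize (HT s k). unfold on_circle in HT. simpl in HT. lra.
  - intros s Hs. apply limit_loop_const. intros n. apply (HU n); auto.
  - apply limit_loop_const. intros n. apply (HU n).
  - apply limit_loop_const. intros n. apply (HU n).
  - intros s eps Hs Heps. destruct (limit_loop_uniform (eps / 4)) as [N HN]; [lra|].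
    destruct (HU N) as [_ [_ [_ [_ Hc]]]]. destruct (Hc s (eps/4) Hs) as [d [Hd Hd']]; [lra|].
    exists d; split; auto. intros s' Hs' Hss.
    pose proof (HN N s (le_n N)). pose proof (HN N s' (le_n N)). specialize (Hd' s' Hs' Hss).
    pose proof (dT_triangle (limit_loop s) (U N s) (limit_loop s')).
    pose proof (dT_triangle (U N s) (U N s') (limit_loop s')).
    rewrite dT_sym in H. lra.
Qed.

End LoopCompleteness.

Lemma loop_space_complete xb : metric_complete (@dL xb).
Proof.
  intros u Hcau. exists (exist _ (limit_loop xb u) (limit_loop_is_loop xb u Hcau)).
  intros eps Heps. destruct (limit_loop_uniform xb u Hcau (eps / 2)) as [N HN]; [lra|].
  exists N. intros n Hn. apply Rle_lt_trans with (eps / 2); [|lra].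
  apply dL_le. intros s _. apply HN; auto.
Qed.

(** * The Polish group [prod_omega Z] *)

Definition dZ_term (a b : nat -> Z) (k : nat) : R := if Z.eq_dec (a k) (b k) then 0 else 1.

Lemma dZ_term_range a b k : 0 <= dZ_term a b k <= 1.
Proof. unfold dZ_term; destruct Z.eq_dec; lra. Qed.

Lemma dZ_wsum a b : dZ a b = wsum (dZ_term a b).
Proof. reflexivity. Qed.

Lemma dZ_nonneg a b : 0 <= dZ a b.
Proof. apply (wsum_nonneg _ 1 (dZ_term_range a b)). Qed.

Lemma dZ_le_prefix a b K : (forall k, (k < K)%nat -> a k = b k) -> dZ a b <= 2 * (/2)^K.
Proof.
  intros H. assert (dZ a b <= 2 * 0 + 2 * (/2)^K); [|lra].
  apply wsum_le_prefix; [apply dZ_term_range | lra|].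
  intros k Hk. unfold dZ_term. destruct Z.eq_dec; [lra | exfalso; auto].
Qed.

Lemma dZ_lt_agree a b K : dZ a b < (/2)^K -> forall k, (k <= K)%nat -> a k = b k.
Proof.
  intros H k Hk. pose proof (wsum_ge_term (dZ_term a b) 1 (dZ_term_range a b) k).
  pose proof (pow_half_le k K Hk). pose proof (pow_half_pos k).
  assert (C : dZ_term a b k < 1) by (apply Rmult_lt_reg_l with ((/2)^k); auto; rewrite dZ_wsum in H; lra).
  unfold dZ_term in C. destruct Z.eq_dec; auto. lra.
Qed.

Lemma dZ_metric : is_metric dZ.
Proof.
  split; [|split; [|split]].
  - apply dZ_nonneg.
  - intros a b; split.
    + intros H. apply functional_extensionality; intros k. apply (dZ_lt_agree a b k); [|lia].
      rewrite H; apply pow_half_pos.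
    + intros ->. apply Rle_antisym; [|apply dZ_nonneg]. apply Rnot_lt_le; intros Hlt.
      destruct (pow_half_small _ Hlt) as [K HK]. pose proof (dZ_le_prefix b b K (fun _ _ => eq_refl)). lra.
  - intros a b. unfold dZ. apply Series_ext. intros n. do 2 destruct Z.eq_dec; try lra; congruence.
  - intros a b c. rewrite !dZ_wsum, <- (wsum_plus _ _ 1) by apply dZ_term_range.
    apply (wsum_le _ _ 2).
    + intros k. pose proof (dZ_term_range a c k). split; [lra|].
      unfold dZ_term. repeat destruct Z.eq_dec; try lra. congruence.
    + intros k. pose proof (dZ_term_range a b k); pose proof (dZ_term_range b c k). lra.
Qed.

Fixpoint max_upto (f : nat -> nat) (K : nat) : nat :=
  match K with O => O | S K => max (f K) (max_upto f K) end.

Lemma max_upto_ge f K k : (k < K)%nat -> (f k <= max_upto f K)%nat.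
Proof.
  induction K; simpl; intros H; [lia|].
  destruct (Nat.eq_dec k K) as [->|Hne]; [lia|]. specialize (IHK ltac:(lia)); lia.
Qed.

Lemma dZ_complete : metric_complete dZ.
Proof.
  intros u Hcau.
  assert (Hk : forall k, exists N, forall m n, (N <= m)%nat -> (N <= n)%nat -> u m k = u n k).
  { intros k. destruct (Hcau ((/2)^k) (pow_half_pos k)) as [N HN]. exists N. intros m n Hm Hn.
    apply (dZ_lt_agree _ _ k (HN m n Hm Hn)). lia. }
  destruct (choice _ Hk) as [Nf HNf].
  exists (fun k => u (Nf k) k). intros eps Heps. destruct (pow_half_small eps Heps) as [K HK].
  exists (max_upto Nf K). intros n Hn. eapply Rle_lt_trans; [|apply HK]. apply dZ_le_prefix.
  intros k Hk'. apply HNf; auto. pose proof (max_upto_ge Nf K k Hk'). lia.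
Qed.

(* Integers and finite sequences of naturals are coded by naturals through Cantor pairing. *)
Definition Z_of_code (m : nat) : Z :=
  (Z.of_nat (fst (Cantor.of_nat m)) - Z.of_nat (snd (Cantor.of_nat m)))%Z.
Definition code_of_Z (z : Z) : nat := Cantor.to_nat (Z.to_nat z, Z.to_nat (- z)).

Lemma Z_of_code_of_Z z : Z_of_code (code_of_Z z) = z.
Proof. unfold Z_of_code, code_of_Z. rewrite Cantor.cancel_of_to. simpl. lia. Qed.

Fixpoint code_nth (c : nat) (k : nat) : nat :=
  match k with O => fst (Cantor.of_nat c) | S k => code_nth (snd (Cantor.of_nat c)) k end.

Fixpoint code_prefix (a : nat -> nat) (K : nat) : nat :=
  match K with O => O | S K => Cantor.to_nat (a O, code_prefix (fun j => a (S j)) K) end.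

Lemma code_nth_prefix K : forall a k, (k < K)%nat -> code_nth (code_prefix a K) k = a k.
Proof.
  induction K; intros a k Hk; [lia|].
  destruct k; cbn [code_nth code_prefix]; rewrite Cantor.cancel_of_to; cbn [fst snd]; auto.
  apply (IHK (fun j => a (S j))). lia.
Qed.

Lemma dZ_separable : metric_separable dZ.
Proof.
  right. exists (fun c k => Z_of_code (code_nth c k)). intros a eps Heps.
  destruct (pow_half_small eps Heps) as [K HK]. exists (code_prefix (fun j => code_of_Z (a j)) K).
  eapply Rle_lt_trans; [|apply HK]. apply dZ_le_prefix. intros k Hk.
  rewrite code_nth_prefix, Z_of_code_of_Z; auto.
Qed.

Lemma dZ_polish : polish dZ.
Proof. split; [apply dZ_metric | split; [apply dZ_complete | apply dZ_separable]]. Qed.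

(** * Winding numbers as a continuous retraction onto [prod_omega Z] *)

Definition wind_map (x : R * R) (l : loop_space (const_seq x)) : nat -> Z := wind x (proj1_sig l).

(* Loops that are [dL]-close have close coordinates, hence equal coordinate winding numbers. *)
Lemma wind_map_continuous x : on_circle x -> metric_continuous (@dL (const_seq x)) dZ (wind_map x).
Proof.
  intros Hx l eps Heps. destruct (pow_half_small eps Heps) as [K HK].
  exists ((/2)^K * (1/2)). split; [pose proof (pow_half_pos K); lra|].
  intros l' Hll. eapply Rle_lt_trans; [|apply HK]. apply dZ_le_prefix. intros k Hk.
  unfold wind_map. destruct l as [f Pf], l' as [f' Pf']; simpl in *.
  apply (has_winding_close x (fun s => f s k) (fun s => f' s k)); auto using wind_spec.
  intros s Hs. assert (deucl (f s k) (f' s k) < 1/2); [|lra].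
  apply dT_lt_coord; [lra|]. eapply Rle_lt_trans; [apply (dL_ge _ (exist _ f Pf) (exist _ f' Pf') s Hs)|].
  eapply Rlt_le_trans; eauto. apply Rmult_le_compat_r; [lra | apply pow_half_le; lia].
Qed.

Definition std_loop (x : R * R) (n : nat -> Z) : R -> nat -> R * R :=
  fun s k => rot x (2 * PI * IZR (n k) * clamp s).

Lemma std_loop_is_loop x n : on_circle x -> is_loop (const_seq x) (std_loop x n).
Proof.
  intros Hx. unfold std_loop. split; [|split; [|split; [|split]]].
  - intros s k. apply rot_circle; auto.
  - intros s Hs. apply functional_extensionality; intros k. unfold const_seq.
    destruct (clamp_out s Hs) as [E|E]; rewrite E.
    + rewrite Rmult_0_r; apply rot_0.
    + rewrite Rmult_1_r; apply rot_2PI_int.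
  - apply functional_extensionality; intros k. rewrite clamp_id by lra. rewrite Rmult_0_r; apply rot_0.
  - apply functional_extensionality; intros k. rewrite clamp_id by lra. rewrite Rmult_1_r; apply rot_2PI_int.
  - intros s eps Hs Heps.
    destruct (dT_small_of_coords (fun k => rot x (2 * PI * IZR (n k) * clamp s))
       (fun s' k => rot x (2 * PI * IZR (n k) * clamp s'))
       (fun s' d => unit_int s' /\ Rabs (s - s') < d)) with (eps := eps) as [d [Hd Hd']]; auto.
    + intros nu d d' _ Hle [A B]. split; auto; lra.
    + intros k e He.
      assert (Cc : continuity_pt (fun s => 2 * PI * IZR (n k) * clamp s) s).
      { apply cont_mult; [apply cont_const | apply cont_clamp, cont_id]. }
      destruct (continuity_pt_eps_delta _ s Cc e He) as [d [Hd Hd']].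
      exists d; split; auto. intros s' [_ Hs']. eapply Rle_lt_trans; [apply deucl_rot_le; auto|].
      rewrite Rabs_minus_sym. apply Hd'; rewrite Rabs_minus_sym; auto.
    + exists d; split; auto.
Qed.

Definition std_loop_map (x : R * R) (Hx : on_circle x) (n : nat -> Z) : loop_space (const_seq x) :=
  exist _ (std_loop x n) (std_loop_is_loop x n Hx).

Lemma wind_map_std_loop x Hx n : wind_map x (std_loop_map x Hx n) = n.
Proof.
  apply functional_extensionality; intros k. unfold wind_map, std_loop_map; simpl.
  apply (has_winding_unique x (fun s => std_loop x n s k)); auto.
  - apply wind_spec; auto. apply std_loop_is_loop; auto.
  - apply has_winding_linear.
Qed.

Lemma std_loop_map_continuous x Hx : metric_continuous dZ (@dL (const_seq x)) (std_loop_map x Hx).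
Proof.
  intros n eps Heps. destruct (pow_half_small (eps/2)) as [K HK]; [lra|].
  exists ((/2)^K). split; [apply pow_half_pos|]. intros m Hnm.
  pose proof (dZ_lt_agree _ _ _ Hnm) as Ag.
  apply Rle_lt_trans with (2 * 0 + 2 * (/2)^K); [|lra].
  apply dL_le. intros s _. simpl. apply dT_le_prefix; [lra|].
  intros k Hk. unfold std_loop. rewrite (Ag k), deucl_refl by lia. lra.
Qed.

(** * Separability of the loop space *)

Fixpoint pl_sum (v : nat -> R) (M : R) (j : nat) (s : R) : R :=
  match j with
  | O => 0
  | S j => pl_sum v M j s + (v (S j) - v j) * clamp (M * s - INR j)
  end.

(* Piecewise-linear interpolation of the nodes [(i / (N+1), v i)], [i <= N+1]. *)
Definition pl_interp (v : nat -> R) (N : nat) (s : R) : R := pl_sum v (INR (S N)) (S N) s.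

Lemma pl_sum_S v M j s : pl_sum v M (S j) s = pl_sum v M j s + (v (S j) - v j) * clamp (M * s - INR j).
Proof. reflexivity. Qed.

Lemma pl_sum_cont v M j s : continuity_pt (fun s => pl_sum v M j s) s.
Proof.
  induction j; cbn [pl_sum]; [apply cont_const|].
  apply cont_plus; auto. apply cont_mult; [apply cont_const|].
  apply cont_clamp, cont_minus; [apply cont_mult; [apply cont_const | apply cont_id] | apply cont_const].
Qed.

Lemma pl_sum_before v M j s : INR j <= M * s -> forall m, (m <= j)%nat -> pl_sum v M m s = v m - v O.
Proof.
  intros H m. induction m; intros Hm; [simpl; ring|].
  rewrite pl_sum_S, IHm by lia. rewrite clamp_ge1; [ring|].
  assert (INR (S m) <= INR j) by (apply le_INR; lia). rewrite S_INR in *. lra.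
Qed.

Lemma pl_sum_after v M j s : M * s <= INR j + 1 -> forall d, pl_sum v M (S j + d) s = pl_sum v M (S j) s.
Proof.
  intros H d. induction d; [rewrite Nat.add_0_r; auto|].
  replace (S j + S d)%nat with (S (S j + d)) by lia. rewrite pl_sum_S, IHd, clamp_le0; [ring|].
  rewrite plus_INR, S_INR. pose proof (pos_INR d). lra.
Qed.

Lemma pl_interp_piece v N j s : v O = 0 -> (j <= N)%nat -> INR j <= INR (S N) * s <= INR j + 1 ->
  pl_interp v N s = v j + (v (S j) - v j) * (INR (S N) * s - INR j).
Proof.
  intros H0 Hj [H1 H2]. unfold pl_interp. replace (S N) with (S j + (N - j))%nat at 2 by lia.
  rewrite pl_sum_after by auto. rewrite pl_sum_S, (pl_sum_before v _ j s H1 j) by lia.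
  rewrite clamp_id by lra. rewrite H0; ring.
Qed.

Lemma exists_piece N s : 0 <= s <= 1 -> exists j, (j <= N)%nat /\ INR j <= INR (S N) * s <= INR j + 1.
Proof.
  intros Hs. assert (Hy : 0 <= INR (S N) * s <= INR (S N)).
  { pose proof (pos_INR (S N)). split; [nra|]. rewrite <- (Rmult_1_r (INR (S N))) at 2.
    apply Rmult_le_compat_l; lra. }
  revert Hy. generalize (INR (S N) * s) as y. induction N; intros y Hy.
  - exists O. split; auto. simpl in *; lra.
  - destruct (Rle_dec y (INR (S N))).
    + destruct (IHN y) as [j [Hj Hj']]; [pose proof (pos_INR (S N)); lra|]. exists j; split; auto.
    + exists (S N). split; auto. rewrite (S_INR (S N)) in Hy. lra.
Qed.

Lemma pl_interp_0 v N : v O = 0 -> pl_interp v N 0 = 0.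
Proof. intros H. rewrite (pl_interp_piece v N 0) by (simpl; auto with arith; lra). rewrite H. simpl. ring. Qed.

Lemma pl_interp_1 v N : v O = 0 -> pl_interp v N 1 = v (S N).
Proof. intros H. rewrite (pl_interp_piece v N N) by (auto; rewrite S_INR; lra). rewrite S_INR. ring. Qed.

Lemma Rabs_convex_lt a b lam eta : 0 <= lam <= 1 -> Rabs a < eta -> Rabs b < eta ->
  Rabs ((1 - lam) * a + lam * b) < eta.
Proof.
  intros Hlam Ha Hb. eapply Rle_lt_trans; [apply Rabs_triang|].
  rewrite !Rabs_mult, (Rabs_pos_eq (1 - lam)), (Rabs_pos_eq lam) by lra.
  destruct (Req_dec lam 0) as [E|E].
  - rewrite E. pose proof (Rabs_pos b). lra.
  - assert (lam * Rabs b < lam * eta) by (apply Rmult_lt_compat_l; lra).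
    assert ((1 - lam) * Rabs a <= (1 - lam) * eta) by (apply Rmult_le_compat_l; lra).
    lra.
Qed.

Lemma pl_interp_approx (phi : R -> R) (v : nat -> R) N eta d s :
  v O = 0 -> / INR (S N) < d -> / INR (S N) < eta / 2 ->
  (forall s s', 0 <= s <= 1 -> 0 <= s' <= 1 -> Rabs (s - s') < d -> Rabs (phi s - phi s') < eta / 2) ->
  (forall i, (i <= S N)%nat -> Rabs (v i - phi (INR i / INR (S N))) <= / INR (S N)) ->
  0 <= s <= 1 -> Rabs (phi s - pl_interp v N s) < eta.
Proof.
  intros H0 HiMd HiMe Hphi Hv Hs. set (M := INR (S N)) in *.
  assert (HM : 0 < M) by (unfold M; apply lt_0_INR; lia).
  assert (HiM : 0 < / M) by (apply Rinv_0_lt_compat; auto).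
  destruct (exists_piece N s Hs) as [j [Hj [Hj1 Hj2]]]. fold M in Hj1, Hj2.
  rewrite (pl_interp_piece v N j s) by (auto; fold M; lra). fold M.
  assert (Hnode : forall i, (i <= S N)%nat -> Rabs (s - INR i / M) <= / M -> Rabs (phi s - v i) < eta).
  { intros i Hi Hsi. specialize (Hv i Hi).
    assert (Hi01 : 0 <= INR i / M <= 1).
    { split; [apply Rdiv_le_0_compat; [apply pos_INR | lra]|].
      apply Rmult_le_reg_r with M; auto. unfold Rdiv; rewrite Rmult_assoc, Rinv_l by lra.
      unfold M. rewrite Rmult_1_r, Rmult_1_l. apply le_INR; auto. }
    assert (Rabs (phi s - phi (INR i / M)) < eta / 2) by (apply Hphi; auto; lra).
    replace (phi s - v i) with ((phi s - phi (INR i / M)) - (v i - phi (INR i / M))) by ring.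
    pose proof (Rabs_triang (phi s - phi (INR i / M)) (- (v i - phi (INR i / M)))).
    rewrite Rabs_Ropp in *. unfold Rminus at 1. lra. }
  assert (B1 : Rabs (phi s - v j) < eta).
  { apply Hnode; [lia|]. replace (s - INR j / M) with ((M * s - INR j) / M) by (field; lra).
    rewrite Rabs_pos_eq by (apply Rdiv_le_0_compat; lra).
    unfold Rdiv. rewrite <- (Rmult_1_l (/ M)) at 2. apply Rmult_le_compat_r; lra. }
  assert (B2 : Rabs (phi s - v (S j)) < eta).
  { apply Hnode; [lia|]. rewrite Rabs_minus_sym, S_INR.
    replace ((INR j + 1) / M - s) with ((INR j + 1 - M * s) / M) by (field; lra).
    rewrite Rabs_pos_eq by (apply Rdiv_le_0_compat; lra).
    unfold Rdiv. rewrite <- (Rmult_1_l (/ M)) at 2. apply Rmult_le_compat_r; lra. }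
  replace (phi s - (v j + (v (S j) - v j) * (M * s - INR j)))
    with ((1 - (M * s - INR j)) * (phi s - v j) + (M * s - INR j) * (phi s - v (S j))) by ring.
  apply Rabs_convex_lt; auto; lra.
Qed.

Definition code_entry (c1 k i : nat) : Z := Z_of_code (code_nth (code_nth c1 k) i).

(* The first and last nodes are [0] and an integer, so that the interpolated
   angle, multiplied by [2 pi], describes a loop. *)
Definition dense_node (N c1 k i : nat) : R :=
  if Nat.eqb i O then 0
  else if Nat.eqb i (S N) then IZR (code_entry c1 k i) else IZR (code_entry c1 k i) / INR (S N).

(* [c] codes a pair [(N, c1)]: the first [N] coordinates interpolate angles with
   nodes coded by [c1], the others are constant. *)
Definition dense_loop (x : R * R) (c : nat) : R -> nat -> R * R :=
  fun s k => if Nat.ltb k (fst (Cantor.of_nat c))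
             then rot x (2 * PI * pl_interp (dense_node (fst (Cantor.of_nat c)) (snd (Cantor.of_nat c)) k)
                                   (fst (Cantor.of_nat c)) (clamp s))
             else x.

Lemma dense_node_approx (phi : R -> R) (w : Z) N c1 k :
  phi 0 = 0 -> phi 1 = IZR w ->
  (forall i, (i <= S N)%nat ->
     code_entry c1 k i = if Nat.eqb i (S N) then w else up (phi (INR i / INR (S N)) * INR (S N))) ->
  forall i, (i <= S N)%nat -> Rabs (dense_node N c1 k i - phi (INR i / INR (S N))) <= / INR (S N).
Proof.
  intros H0 H1 Hc i Hi. set (M := INR (S N)).
  assert (HM : 0 < M) by (unfold M; apply lt_0_INR; lia).
  pose proof (Rinv_0_lt_compat _ HM). unfold dense_node. fold M.
  destruct (Nat.eqb i 0) eqn:E0; [|destruct (Nat.eqb i (S N)) eqn:E1].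
  - apply Nat.eqb_eq in E0. subst i. simpl INR. rewrite Rdiv_0_l, H0, Rminus_diag, Rabs_R0. lra.
  - apply Nat.eqb_eq in E1. subst i. rewrite Hc, Nat.eqb_refl by lia. fold M.
    rewrite Rdiv_diag, H1, Rminus_diag, Rabs_R0 by lra. lra.
  - rewrite Hc, E1 by auto. fold M. set (r := phi (INR i / M) * M). destruct (archimed r) as [A1 A2].
    replace (IZR (up r) / M - phi (INR i / M)) with ((IZR (up r) - r) / M) by (unfold r; field; lra).
    rewrite Rabs_pos_eq by (apply Rdiv_le_0_compat; lra).
    unfold Rdiv. rewrite <- (Rmult_1_l (/ M)) at 2. apply Rmult_le_compat_r; lra.
Qed.

Lemma dense_loop_is_loop x c : on_circle x -> is_loop (const_seq x) (dense_loop x c).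
Proof.
  intros Hx. set (N := fst (Cantor.of_nat c)). set (c1 := snd (Cantor.of_nat c)).
  assert (E0 : forall k, dense_loop x c 0 k = x).
  { intros k. unfold dense_loop. fold N c1. destruct (Nat.ltb k N); auto.
    rewrite clamp_id, pl_interp_0 by (auto; lra). rewrite Rmult_0_r; apply rot_0. }
  assert (E1 : forall k, dense_loop x c 1 k = x).
  { intros k. unfold dense_loop. fold N c1. destruct (Nat.ltb k N); auto.
    rewrite clamp_id, pl_interp_1 by (auto; lra).
    unfold dense_node. rewrite Nat.eqb_refl. simpl Nat.eqb. apply rot_2PI_int. }
  split; [|split; [|split; [|split]]].
  - intros s k. unfold dense_loop. destruct Nat.ltb; auto. apply rot_circle; auto.
  - intros s Hs. apply functional_extensionality; intros k. unfold const_seq.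
    destruct (clamp_out s Hs) as [E|E];
      [transitivity (dense_loop x c 0 k); [|apply E0] | transitivity (dense_loop x c 1 k); [|apply E1]];
      unfold dense_loop; rewrite E, clamp_id by lra; auto.
  - apply functional_extensionality; intros k. apply E0.
  - apply functional_extensionality; intros k. apply E1.
  - intros s eps Hs Heps.
    destruct (dT_small_of_coords (dense_loop x c s) (dense_loop x c)
        (fun s' d => unit_int s' /\ Rabs (s - s') < d))
      with (eps := eps) as [d [Hd Hd']]; auto.
    + intros nu d d' _ Hle [A B]. split; auto; lra.
    + intros k e He. unfold dense_loop. fold N c1. destruct (Nat.ltb k N).
      * assert (Cc : continuity_pt (fun s => 2 * PI * pl_interp (dense_node N c1 k) N (clamp s)) s).
        { apply cont_mult; [apply cont_const|]. unfold pl_interp.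
          apply (cont_comp clamp (fun z => pl_sum (dense_node N c1 k) (INR (S N)) (S N) z));
            [apply cont_clamp, cont_id | apply pl_sum_cont]. }
        destruct (continuity_pt_eps_delta _ s Cc e He) as [d [Hd Hd']].
        exists d; split; auto. intros s' [_ Hs']. eapply Rle_lt_trans; [apply deucl_rot_le; auto|].
        rewrite Rabs_minus_sym. apply Hd'; rewrite Rabs_minus_sym; auto.
      * exists 1; split; [lra|]. intros; rewrite deucl_refl; auto.
    + exists d; split; auto.
Qed.

Lemma angle_lifts_equicontinuous x l K e : on_circle x -> is_loop (const_seq x) l -> 0 < e ->
  exists d, 0 < d /\ forall k, (k < K)%nat -> forall s s', 0 <= s <= 1 -> 0 <= s' <= 1 ->
    Rabs (s - s') < d -> Rabs (angle_lift x l k s / (2 * PI) - angle_lift x l k s' / (2 * PI)) < e.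
Proof.
  intros Hx Hl He. pose proof PI_RGT_0 as HPI.
  apply (exists_common_delta (fun k d => forall s s', 0 <= s <= 1 -> 0 <= s' <= 1 -> Rabs (s - s') < d ->
    Rabs (angle_lift x l k s / (2 * PI) - angle_lift x l k s' / (2 * PI)) < e)).
  - intros k. destruct (angle_lift_spec x l k Hx Hl) as [C _].
    destruct (Heine_cor2 (f := fun s => angle_lift x l k s / (2 * PI)) (a := 0) (b := 1))
      with (eps := mkposreal e He) as [dd Hdd].
    { intros s _. apply (cont_div (angle_lift x l k) (fun _ => 2 * PI)); auto; [apply cont_const | lra]. }
    exists dd. split; [apply cond_pos|]. intros s s' Hs Hs' Hss. apply Hdd; auto.
  - intros k dd dd' _ Hle H s s' Hs Hs' Hss. apply H; auto. lra.
Qed.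

(* Approximate the first [K] angle lifts of [l], uniformly continuous with a
   common modulus [d], by interpolations with [N+1 > 1/d] pieces and nodes in
   [Z / (N+1)]; the remaining coordinates cost at most [2 (/2)^K] in [dT]. *)
Lemma loop_space_separable x : on_circle x -> metric_separable (@dL (const_seq x)).
Proof.
  intros Hx. right. exists (fun c => exist _ (dense_loop x c) (dense_loop_is_loop x c Hx)).
  intros [l Hl] eps Heps. pose proof PI_RGT_0 as HPI.
  set (phi := fun k s => angle_lift x l k s / (2 * PI)).
  set (eta := eps / (16 * PI)).
  assert (Heta : 0 < eta) by (unfold eta; apply Rdiv_lt_0_compat; lra).
  destruct (pow_half_small (eps / 4)) as [K HK]; [lra|].
  destruct (angle_lifts_equicontinuous x l K (eta / 2) Hx Hl) as [d [Hd Hd']]; [lra|].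
  destruct (archimed_cor1 (Rmin d (eta / 2))) as [N0 [HN0 HN0pos]]; [unfold Rmin; destruct Rle_dec; lra|].
  set (N := max N0 K).
  assert (HiM : / INR (S N) < Rmin d (eta / 2)).
  { eapply Rle_lt_trans; [|apply HN0]. apply Rinv_le_contravar; [apply lt_0_INR; lia | apply le_INR; lia]. }
  pose proof (Rmin_l d (eta / 2)); pose proof (Rmin_r d (eta / 2)).
  set (node := fun k i => if Nat.eqb i (S N) then wind x l k else up (phi k (INR i / INR (S N)) * INR (S N))).
  set (c1 := code_prefix (fun k => code_prefix (fun i => code_of_Z (node k i)) (S (S N))) K).
  exists (Cantor.to_nat (N, c1)).
  apply Rle_lt_trans with (eps / 2); [|lra].
  apply dL_le. intros s Hs. cbn [proj1_sig].
  apply Rle_trans with (2 * (eps / 8) + 2 * (/2)^K); [|lra].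
  apply dT_le_prefix; [lra|]. intros k Hk.
  destruct (angle_lift_spec x l k Hx Hl) as [_ [HR [HZ HO]]].
  unfold dense_loop. rewrite Cantor.cancel_of_to. cbn [fst snd].
  replace (Nat.ltb k N) with true by (symmetry; apply Nat.ltb_lt; unfold N; lia).
  rewrite clamp_id, <- HR by auto.
  eapply Rle_trans; [apply deucl_rot_le; auto|].
  replace (angle_lift x l k s - 2 * PI * pl_interp (dense_node N c1 k) N s)
    with (2 * PI * (phi k s - pl_interp (dense_node N c1 k) N s)) by (unfold phi; field; lra).
  rewrite Rabs_mult, (Rabs_pos_eq (2 * PI)) by lra.
  apply Rle_trans with (2 * PI * eta); [|right; unfold eta; field; lra].
  apply Rmult_le_compat_l; [lra|]. left.
  apply (pl_interp_approx (phi k) _ N eta d s); [reflexivity | lra | lra | | | exact Hs].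
  - intros s0 s' Hs0 Hs' Hss. apply (Hd' k); auto.
  - apply (dense_node_approx (phi k) (wind x l k)).
    + unfold phi. rewrite HZ. field. lra.
    + unfold phi. rewrite HO. field. lra.
    + intros i Hi. unfold code_entry, c1.
      rewrite code_nth_prefix, code_nth_prefix, Z_of_code_of_Z by lia. reflexivity.
Qed.

Lemma loop_space_polish x : on_circle x -> polish (@dL (const_seq x)).
Proof.
  intros Hx. split; [apply dL_metric | split; [apply loop_space_complete | apply loop_space_separable; auto]].
Qed.

Theorem lemma5p1 (Gamma : pointclass) (HGamma : closed_cont_preimages Gamma)
  (x : R * R) (Hx : on_circle x) (G : (nat -> Z) -> Prop) (HG : is_subgroup G) :
  Gamma (nat -> Z) dZ G <->
  Gamma (loop_space (const_seq x)) (@dL (const_seq x)) (loops_in x G).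
Proof.
  pose proof (loop_space_polish x Hx) as PL.
  assert (Hpre : loops_in x G = (fun l => G (wind_map x l))).
  { apply functional_extensionality; intros l. apply propositional_extensionality.
    apply loops_in_iff; auto. }
  assert (Hsec : G = (fun n => G (wind_map x (std_loop_map x Hx n)))).
  { apply functional_extensionality; intros n. rewrite wind_map_std_loop. reflexivity. }
  rewrite Hpre. split; intros H.
  - exact (HGamma _ _ _ _ PL dZ_polish (wind_map x) (wind_map_continuous x Hx) G H).
  - rewrite Hsec. exact (HGamma _ _ _ _ dZ_polish PL (std_loop_map x Hx) (std_loop_map_continuous x Hx) _ H).
Qed.
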